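(* Suppose the chain is $\varrho$-metastable w.r.t. $\mathcal M=\{M_1,\dots,M_K\}$, $K\ge2$, and let $(\mathcal S_i)$ be a metastable partition. Let $M_i\in\mathcal M$, let $\mathcal B\subset\mathcal M\setminus\{M_i\}$ be nonempty with index set $I_{\mathcal B}$, and $B=\bigcup_{M\in\mathcal B}M$. Then for every $\delta\in(0,1/2)$, $$1-2\delta\le\frac{\mathrm{cap}(M_i,B)}{\mathrm{cap}\bigl(\mathcal U_{M_i}(\delta,B),\mathcal U_B(\delta,M_i)\bigr)}\le1,$$ and the set $X=\mathcal S_i\setminus\mathcal U_{M_i}(\delta,B)$ satisfies $\mu[X]\le\varrho\,\delta^{-1}\mu[M_i]$.
   Context: Setting: $\mathcal S$ countable; $(X(t))_{t\in\mathbb N_0}$ irreducible positive recurrent discrete-time Markov chain reversible w.r.t. its invariant probability measure $\mu$; $\mathbb P_\nu$ law started from $\nu$; $\tau_A=\inf\{t>0:X(t)\in A\}$; $\mu_A=\mu[\cdot\mid A]$. Equilibrium potential $h_{A,B}$: $1$ on $A$, $0$ on $B$, $\mathbb P_x[\tau_A<\tau_B]$ elsewhere; $\mathrm{cap}(A,B)=\sum_{x\in A}\mu(x)\mathbb P_x[\tau_B<\tau_A]$. Metastability: $\mathcal M=\{M_1,\dots,M_K\}$ nonempty pairwise disjoint, $\mathbf M=\bigcup_jM_j$; $p_{\mathrm{esc}}:=\max_{M\in\mathcal M}\mathbb P_{\mu_M}[\tau_{\mathbf M\setminus M}<\tau_M]$; $\varrho$-metastable means $|\mathcal M|\,p_{\mathrm{esc}}\le\varrho\min_{\emptyset\ne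 A\subset\mathcal S\setminus\mathbf M}\mathbb P_{\mu_A}[\tau_{\mathbf M}<\tau_A]$. Local valley $\mathcal V_i=\{x:\mathbb P_x[\tau_{M_i}<\tau_{\mathbf M\setminus M_i}]\ge\max_{j\ne i}\mathbb P_x[\tau_{M_j}<\tau_{\mathbf M\setminus M_j}]\}$; metastable partition: $\mathcal S=\biguplus_i\mathcal S_i$, $\mathcal S_i\subset\mathcal V_i$, $M_i\subset\mathcal S_i$. Harmonic neighbourhood: for disjoint nonempty subcollections $\mathcal A,\mathcal B\subset\mathcal M$ with index sets $I_{\mathcal A},I_{\mathcal B}$, $A=\bigcup_{M\in\mathcal A}M$, $B=\bigcup_{M\in\mathcal B}M$ and $\delta\in(0,1)$: $\mathcal U_A(\delta,B)=\{x\in\bigcup_{i\in I_{\mathcal A}}\mathcal S_i: h_{A,B}(x)\ge1-\delta\}$. *)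

From Stdlib Require Import Reals Lra List ClassicalEpsilon.
Open Scope R_scope.

Definition pif {A : Type} (P : Prop) (a b : A) : A :=
  if excluded_middle_informative P then a else b.

(** Value of a convergent series (chosen by epsilon; all series used below
    are series of nonnegative terms that converge under the hypotheses). *)
Definition series (f : nat -> R) : R :=
  epsilon (inhabits 0) (fun l => infinite_sum f l).

Definition lim (u : nat -> R) : R :=
  epsilon (inhabits 0) (fun l => Un_cv u l).

Section Chain.
Variable St : Type.

(** A countable state space is given by an enumeration [enum] listing every
    state exactly once ([None] entries are padding, allowing finite S). *)
Definition is_enum (enum : nat -> option St) : Prop :=
  (forall x, exists n, enum n = Some x) /\
  (forall n m x, enum n = Some x -> enum m = Some x -> n = m).

Variable enum : nat -> option St.

Definition sumS (f : St -> R) : R :=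
  series (fun n => match enum n with Some x => f x | None => 0 end).

Definition sumIn (A : St -> Prop) (f : St -> R) : R :=
  sumS (fun x => pif (A x) (f x) 0).

Variable p : St -> St -> R.

Definition stochastic : Prop :=
  (forall x y, 0 <= p x y) /\ (forall x, infinite_sum
      (fun n => match enum n with Some y => p x y | None => 0 end) 1).

Fixpoint path_pos (n : nat) (x y : St) : Prop :=
  match n with
  | O => x = y
  | S n => exists z, 0 < p x z /\ path_pos n z y
  end.

Definition irreducible : Prop := forall x y, exists n, path_pos n x y.

(** [avoid A n x] = P_x[ X(t) \notin A for t = 1..n ]. *)
Fixpoint avoid (A : St -> Prop) (n : nat) (x : St) : R :=
  match n with
  | O => 1
  | S n => sumS (fun y => p x y * pif (A y) 0 (avoid A n y))
  end.

(** Positive recurrence: E_x[tau_x] = sum_{n>=0} P_x[tau_x > n] < infinity. *)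
Definition positive_recurrent : Prop :=
  forall x, exists l, infinite_sum (fun n => avoid (fun y => y = x) n x) l.

Variable mu : St -> R.

Definition invariant_prob : Prop :=
  (forall x, 0 <= mu x) /\
  infinite_sum (fun n => match enum n with Some x => mu x | None => 0 end) 1 /\
  (forall y, sumS (fun x => mu x * p x y) = mu y).

Definition reversible : Prop := forall x y, mu x * p x y = mu y * p y x.

Definition chain_setting : Prop :=
  is_enum enum /\ stochastic /\ irreducible /\ positive_recurrent /\
  invariant_prob /\ reversible.

(** [hitn A B n x] = P_x[ tau_A < tau_B, tau_A <= n ], tau = first time > 0. *)
Fixpoint hitn (A B : St -> Prop) (n : nat) (x : St) : R :=
  match n with
  | O => 0
  | S n => sumS (fun y => p x y * pif (B y) 0 (pif (A y) 1 (hitn A B n y)))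
  end.

(** P_x[ tau_A < tau_B ]. *)
Definition hit (A B : St -> Prop) (x : St) : R := lim (fun n => hitn A B n x).

Definition muS (A : St -> Prop) : R := sumIn A mu.

(** P_{mu_A}[ tau_B < tau_A ] (mu_A = mu[. | A]). *)
Definition hit_from (A : St -> Prop) (C D : St -> Prop) : R :=
  sumIn A (fun x => mu x * hit C D x) / muS A.

Definition h (A B : St -> Prop) (x : St) : R :=
  pif (A x) 1 (pif (B x) 0 (hit A B x)).

Definition cap (A B : St -> Prop) : R := sumIn A (fun x => mu x * hit B A x).

Variable K : nat.
Variable M : nat -> St -> Prop.

Definition Mall (x : St) : Prop := exists j, (j < K)%nat /\ M j x.

Definition metastable_family : Prop :=
  (forall j, (j < K)%nat -> exists x, M j x) /\
  (forall j k x, (j < K)%nat -> (k < K)%nat -> j <> k -> M j x -> M k x -> False).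

Definition esc (j : nat) : R :=
  hit_from (M j) (fun x => Mall x /\ ~ M j x) (M j).

Definition p_esc : R := fold_right Rmax 0 (map esc (seq 0 K)).

Definition metastable (rho : R) : Prop :=
  forall A : St -> Prop, (exists x, A x) -> (forall x, A x -> ~ Mall x) ->
    INR K * p_esc <= rho * hit_from A Mall A.

Definition valley (i : nat) (x : St) : Prop :=
  forall j, (j < K)%nat -> j <> i ->
    hit (M j) (fun y => Mall y /\ ~ M j y) x <=
    hit (M i) (fun y => Mall y /\ ~ M i y) x.

Definition metastable_partition (Sp : nat -> St -> Prop) : Prop :=
  (forall x, exists j, (j < K)%nat /\ Sp j x) /\
  (forall j k x, (j < K)%nat -> (k < K)%nat -> j <> k -> Sp j x -> Sp k x -> False) /\
  (forall j x, (j < K)%nat -> Sp j x -> valley j x) /\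
  (forall j x, (j < K)%nat -> M j x -> Sp j x).

Definition unionM (I : nat -> Prop) (x : St) : Prop := exists j, I j /\ M j x.

Definition harm_nbhd (Sp : nat -> St -> Prop) (IA : nat -> Prop)
    (A B : St -> Prop) (delta : R) (x : St) : Prop :=
  (exists j, IA j /\ Sp j x) /\ 1 - delta <= h A B x.

End Chain.

Arguments sumS {St}. Arguments sumIn {St}. Arguments chain_setting {St}.
Arguments hit {St}. Arguments h {St}. Arguments cap {St}. Arguments muS {St}.
Arguments metastable_family {St}. Arguments metastable {St}.
Arguments metastable_partition {St}. Arguments unionM {St}.
Arguments harm_nbhd {St}. Arguments Mall {St}. Arguments hit_from {St}.

(* Everything rests on two facts about the first visit to a set [V]: the strong Markov property
   [hit A B x = sum_(y in V) P_x[tau_y < tau_(V \ y)] h_(A,B)(y)] for [A, B] inside [V], and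
   reversibility, which makes [mu(x) P_x[tau_y < tau_(V \ y)]] symmetric in [x, y] in [V].
   With [V = U1 \/ U2] and [h = h_(M_i,B)], the returns to [U1] cancel by symmetry, so
   [cap(M_i, B) = sum_(x in U1) mu(x) sum_(y in U2) P_x[tau_y < tau_(V \ y)] (h(x) - h(y))],
   while [cap(U1, U2)] is the same sum without the factor [h(x) - h(y)], which lies in [[1 - 2 delta, 1]].
   For the mass bound, a point of [X = S_i \ U1] lies in the valley of [M_i], so it enters [M_i] first
   among the metastable sets with probability at least [1/K], and, not being in [U1], it enters the other
   metastable sets before [M_i] with probability more than [delta]. The same decomposition at
   [X \/ Mall] turns this into [delta * flow(X -> Mall) <= K cap(M_i, Mall \ M_i) <= K p_esc mu[M_i]],
   and rho-metastability bounds [K p_esc mu[X]] by [rho * flow(X -> Mall)]. *)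

From Coquelicot Require Import Coquelicot.
From Stdlib Require Import Reals Lra Lia List ClassicalEpsilon FunctionalExtensionality PropExtensionality Classical.
Open Scope R_scope.

(** * Series of real numbers *)

Lemma Series_Un_cv (a : nat -> R) : ex_series a -> Un_cv (sum_f_R0 a) (Series a).
Proof. intro H. apply is_series_Reals, Series_correct, H. Qed.

Lemma Un_cv_Series (a : nat -> R) l : Un_cv (sum_f_R0 a) l -> ex_series a /\ Series a = l.
Proof.
  intro H. assert (Hl : is_series a l) by (apply is_series_Reals; exact H).
  split; [exists l; exact Hl | apply is_series_unique, Hl].
Qed.

Lemma Un_cv_const (c : R) : Un_cv (fun _ => c) c.
Proof. intros eps He; exists O; intros. unfold R_dist; rewrite Rminus_diag, Rabs_R0; auto. Qed.

(* Coquelicot states these for arbitrary normed modules; fixing them at [R] makes them usable by [apply]. *)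
Lemma ex_series_Rabs_le (a b : nat -> R) : (forall n, Rabs (a n) <= b n) -> ex_series b -> ex_series a.
Proof. intros. apply (ex_series_le a b); auto. Qed.

Lemma ex_series_Rplus (a b : nat -> R) : ex_series a -> ex_series b -> ex_series (fun n => a n + b n).
Proof. intros. apply (ex_series_plus a b); auto. Qed.

Lemma ex_series_Rscal (c : R) (a : nat -> R) : ex_series a -> ex_series (fun n => c * a n).
Proof. intros. apply (ex_series_scal_l c a); auto. Qed.

Lemma ex_series_Rminus (a b : nat -> R) : ex_series a -> ex_series b -> ex_series (fun n => a n - b n).
Proof. intros. apply (ex_series_minus a b); auto. Qed.

Lemma Series_zero_spec : ex_series (fun _ : nat => 0) /\ Series (fun _ : nat => 0) = 0.
Proof.
  apply Un_cv_Series. eapply Un_cv_ext with (fun _ => 0); [|apply Un_cv_const].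
  intro N; induction N; simpl; lra.
Qed.

Lemma ex_series_bounded_nonneg (a : nat -> R) C : (forall n, 0 <= a n) -> (forall N, sum_f_R0 a N <= C) ->
  ex_series a /\ Series a <= C.
Proof.
  intros H0 HC.
  destruct (growing_cv (sum_f_R0 a)) as [l Hl].
  - intro n. simpl. specialize (H0 (S n)). lra.
  - exists C. intros x [N ->]. auto.
  - destruct (Un_cv_Series a l Hl) as [E1 E2]. split; auto. rewrite E2.
    apply Rle_cv_lim with (sum_f_R0 a) (fun _ => C); auto using Un_cv_const.
Qed.

Lemma sum_f_R0_le_Series (a : nat -> R) N : ex_series a -> (forall n, 0 <= a n) -> sum_f_R0 a N <= Series a.
Proof. intros. apply sum_incr; auto. apply Series_Un_cv; auto. Qed.

Lemma term_le_Series (a : nat -> R) n : ex_series a -> (forall n, 0 <= a n) -> a n <= Series a.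
Proof.
  intros. eapply Rle_trans; [|apply (sum_f_R0_le_Series a n); auto].
  destruct n; simpl; [lra|]. assert (0 <= sum_f_R0 a n) by (apply cond_pos_sum; auto). lra.
Qed.

Lemma Series_nonneg (a : nat -> R) : ex_series a -> (forall n, 0 <= a n) -> 0 <= Series a.
Proof. intros. eapply Rle_trans; [apply (H0 O)|]. apply (term_le_Series a O); auto. Qed.

Lemma Series_le_Series (a b : nat -> R) : (forall n, a n <= b n) -> ex_series a -> ex_series b ->
  Series a <= Series b.
Proof.
  intros. assert (Series (fun n => b n - a n) = Series b - Series a) by (rewrite Series_minus; auto).
  assert (0 <= Series (fun n => b n - a n)).
  { apply Series_nonneg. apply ex_series_Rminus; auto. intro n; specialize (H n); lra. }
  lra.
Qed.

Lemma Series_sum_f_R0 (a : nat -> nat -> R) K : (forall k, ex_series (a k)) ->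
  ex_series (fun n => sum_f_R0 (fun k => a k n) K) /\
  Series (fun n => sum_f_R0 (fun k => a k n) K) = sum_f_R0 (fun k => Series (a k)) K.
Proof.
  intro H. induction K as [|K [E1 E2]]; simpl; auto.
  split. apply ex_series_Rplus; auto. rewrite Series_plus, E2; auto.
Qed.

Lemma Un_cv_sum_f_R0 (f : nat -> nat -> R) (g : nat -> R) K : (forall n, Un_cv (fun k => f k n) (g n)) ->
  Un_cv (fun k => sum_f_R0 (f k) K) (sum_f_R0 g K).
Proof. intro H. induction K; simpl; auto. apply CV_plus; auto. Qed.

Lemma Series_Series_swap_nonneg (a : nat -> nat -> R) :
  (forall n m, 0 <= a n m) -> (forall n, ex_series (a n)) -> ex_series (fun n => Series (a n)) ->
  (forall m, ex_series (fun n => a n m)) /\ ex_series (fun m => Series (fun n => a n m)) /\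
  Series (fun m => Series (fun n => a n m)) = Series (fun n => Series (a n)).
Proof.
  intros H0 H1 H2.
  assert (Hm : forall m, ex_series (fun n => a n m)).
  { intro m. apply ex_series_Rabs_le with (fun n => Series (a n)); auto. intro n.
    rewrite Rabs_right by (apply Rle_ge; auto). apply term_le_Series; auto. }
  assert (Hle : ex_series (fun m => Series (fun n => a n m)) /\
                Series (fun m => Series (fun n => a n m)) <= Series (fun n => Series (a n))).
  { apply ex_series_bounded_nonneg. intro m. apply Series_nonneg; auto. intro N.
    destruct (Series_sum_f_R0 (fun m n => a n m) N Hm) as [E1 E2]. rewrite <- E2.
    apply Series_le; auto. intro n; split. apply cond_pos_sum; auto. apply sum_f_R0_le_Series; auto. }
  destruct Hle as [Hex Hle]. repeat split; auto.
  apply Rle_antisym; auto.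
  apply Rle_cv_lim with (sum_f_R0 (fun n => Series (a n))) (fun _ => Series (fun m => Series (fun n => a n m)));
    [|apply Series_Un_cv; auto|apply Un_cv_const].
  intro N. destruct (Series_sum_f_R0 a N H1) as [E1 E2]. rewrite <- E2.
  apply Series_le; auto. intro m; split. apply cond_pos_sum; auto.
  apply (sum_f_R0_le_Series (fun n => a n m)); auto.
Qed.

Lemma Series_monotone_cv (f : nat -> nat -> R) (g : nat -> R) C :
  (forall k n, 0 <= f k n) -> (forall k n, f k n <= f (S k) n) ->
  (forall n, Un_cv (fun k => f k n) (g n)) -> (forall k, ex_series (f k)) ->
  (forall k, Series (f k) <= C) ->
  ex_series g /\ Un_cv (fun k => Series (f k)) (Series g).
Proof.
  intros H0 Hinc Hcv Hex HC.
  assert (Hg : forall k n, f k n <= g n).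
  { intros k n. apply (growing_ineq (fun k => f k n)); auto. intro; auto. }
  assert (Hg0 : forall n, 0 <= g n). { intro n; eapply Rle_trans; [apply (H0 O n)|apply Hg]. }
  assert (HSle : forall k, Series (f k) <= Series (f (S k))).
  { intro k. apply Series_le; [intro n; split; auto|auto]. }
  assert (Hpart : forall N, sum_f_R0 g N <= C).
  { intro N. apply Rle_cv_lim with (fun k => sum_f_R0 (f k) N) (fun _ => C);
      [|apply Un_cv_sum_f_R0; auto|apply Un_cv_const].
    intro k. eapply Rle_trans; [apply sum_f_R0_le_Series; auto|apply HC]. }
  destruct (ex_series_bounded_nonneg g C Hg0 Hpart) as [Eg _]. split; auto.
  destruct (growing_cv (fun k => Series (f k))) as [L HL]; [exact HSle| |].
  { exists (Series g). intros x [k ->]. apply Series_le; [intro n; split; auto|auto]. }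
  replace (Series g) with L; auto.
  apply Rle_antisym.
  - apply Rle_cv_lim with (fun k => Series (f k)) (fun _ => Series g); auto using Un_cv_const.
    intro k. apply Series_le; [intro n; split; auto|auto].
  - apply Rle_cv_lim with (sum_f_R0 g) (fun _ => L); [|apply Series_Un_cv; auto|apply Un_cv_const].
    intro N. apply Rle_cv_lim with (fun k => sum_f_R0 (f k) N) (fun _ => L);
      [|apply Un_cv_sum_f_R0; auto|apply Un_cv_const].
    intro k. eapply Rle_trans; [apply sum_f_R0_le_Series; auto|].
    apply (growing_ineq (fun k => Series (f k))); auto.
Qed.

(** * Sums over the state space *)

Section StateSums.
Context {St : Type} {enum : nat -> option St}.

Definition enum_seq (f : St -> R) (n : nat) : R := match enum n with Some x => f x | None => 0 end.
Definition summable (f : St -> R) : Prop := ex_series (enum_seq f).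

Ltac enum_cases :=
  intros; unfold enum_seq; match goal with |- context [enum ?n] => destruct (enum n) end; auto; try lra.

Lemma sumS_Series f : summable f -> sumS enum f = Series (enum_seq f).
Proof.
  intro H. unfold sumS, series.
  assert (E : exists l, infinite_sum (enum_seq f) l).
  { exists (Series (enum_seq f)). apply is_series_Reals, Series_correct, H. }
  apply (uniqueness_sum (enum_seq f)).
  - exact (epsilon_spec (inhabits 0) (fun l => infinite_sum (enum_seq f) l) E).
  - apply is_series_Reals, Series_correct, H.
Qed.

Lemma sumS_ext f g : (forall x, f x = g x) -> sumS enum f = sumS enum g.
Proof. intro H. replace f with g; auto. apply functional_extensionality; intro; auto. Qed.

Lemma summable_ext f g : (forall x, f x = g x) -> summable f -> summable g.
Proof. intro H. replace g with f; auto. apply functional_extensionality; intro; auto. Qed.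

Lemma summable_Rabs_le f g : (forall x, Rabs (f x) <= g x) -> summable g -> summable f.
Proof. intros H Hg. apply ex_series_Rabs_le with (enum_seq g); auto. enum_cases. rewrite Rabs_R0; lra. Qed.

Lemma summable_plus f g : summable f -> summable g -> summable (fun x => f x + g x).
Proof. intros. eapply ex_series_ext; [|apply (ex_series_Rplus (enum_seq f) (enum_seq g)); auto]. enum_cases. Qed.

Lemma summable_scal c f : summable f -> summable (fun x => c * f x).
Proof. intros. eapply ex_series_ext; [|apply (ex_series_Rscal c (enum_seq f)); auto]. enum_cases. Qed.

Lemma summable_minus f g : summable f -> summable g -> summable (fun x => f x - g x).
Proof. intros. eapply ex_series_ext; [|apply (ex_series_Rminus (enum_seq f) (enum_seq g)); auto]. enum_cases. Qed.

Lemma summable_zero : summable (fun _ => 0).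
Proof. eapply ex_series_ext; [|apply Series_zero_spec]. enum_cases. Qed.

Lemma sumS_zero : sumS enum (fun _ => 0) = 0.
Proof.
  rewrite sumS_Series by apply summable_zero.
  rewrite (Series_ext _ (fun _ => 0)); [apply Series_zero_spec | enum_cases].
Qed.

Lemma sumS_plus f g : summable f -> summable g -> sumS enum (fun x => f x + g x) = sumS enum f + sumS enum g.
Proof.
  intros. rewrite !sumS_Series; auto using summable_plus. rewrite <- Series_plus; auto.
  apply Series_ext. enum_cases.
Qed.

Lemma sumS_scal c f : summable f -> sumS enum (fun x => c * f x) = c * sumS enum f.
Proof.
  intros. rewrite !sumS_Series; auto using summable_scal. rewrite <- Series_scal_l.
  apply Series_ext. enum_cases.
Qed.

Lemma sumS_minus f g : summable f -> summable g -> sumS enum (fun x => f x - g x) = sumS enum f - sumS enum g.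
Proof.
  intros. rewrite !sumS_Series; auto using summable_minus. rewrite <- Series_minus; auto.
  apply Series_ext. enum_cases.
Qed.

Lemma sumS_nonneg f : summable f -> (forall x, 0 <= f x) -> 0 <= sumS enum f.
Proof. intros. rewrite sumS_Series; auto. apply Series_nonneg; auto. enum_cases. Qed.

Lemma sumS_le f g : summable f -> summable g -> (forall x, f x <= g x) -> sumS enum f <= sumS enum g.
Proof. intros. rewrite !sumS_Series; auto. apply Series_le_Series; auto. enum_cases. Qed.

Lemma sumS_pif (P : Prop) f : summable f ->
  summable (fun y => pif P (f y) 0) /\ sumS enum (fun y => pif P (f y) 0) = pif P (sumS enum f) 0.
Proof.
  intro Hf. unfold pif. destruct (excluded_middle_informative P); auto.
  split; [apply summable_zero | apply sumS_zero].
Qed.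

Lemma sumS_mul_pif (c : R) (P : Prop) f : summable f ->
  summable (fun y => c * pif P 0 (f y)) /\ sumS enum (fun y => c * pif P 0 (f y)) = c * pif P 0 (sumS enum f).
Proof.
  intro Hf. unfold pif. destruct (excluded_middle_informative P); cbv iota.
  - split; [eapply summable_ext; [|apply summable_zero]; intro; cbv beta; ring|].
    rewrite (sumS_ext _ (fun _ => 0)) by (intro; ring). rewrite sumS_zero; ring.
  - split; [apply summable_scal, Hf | apply sumS_scal, Hf].
Qed.

Hypothesis Henum : is_enum St enum.

Lemma term_le_sumS f y : summable f -> (forall x, 0 <= f x) -> f y <= sumS enum f.
Proof.
  intros Hs H0. rewrite sumS_Series; auto. destruct (proj1 Henum y) as [n Hn].
  replace (f y) with (enum_seq f n) by (unfold enum_seq; rewrite Hn; auto).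
  apply term_le_Series; [exact Hs | enum_cases].
Qed.

Lemma sumS_eq0_term f y : summable f -> (forall x, 0 <= f x) -> sumS enum f = 0 -> f y = 0.
Proof. intros. pose proof (term_le_sumS f y H H0). specialize (H0 y). lra. Qed.

Lemma sum_f_R0_single (a : nat -> R) n0 : (forall n, n <> n0 -> a n = 0) ->
  forall N, (n0 <= N)%nat -> sum_f_R0 a N = a n0.
Proof.
  intros H N HN. induction N.
  - assert (n0 = O) by lia. subst; auto.
  - destruct (Nat.eq_dec n0 (S N)).
    + subst. simpl. rewrite (sum_eq_R0 a N). lra. intros; apply H; lia.
    + simpl. rewrite IHN, (H (S N)) by lia. lra.
Qed.

Lemma sumS_single (f : St -> R) y :
  summable (fun z => pif (z = y) (f z) 0) /\ sumS enum (fun z => pif (z = y) (f z) 0) = f y.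
Proof.
  destruct Henum as [He Hu]. destruct (He y) as [n0 Hn0].
  set (g := enum_seq (fun z => pif (z = y) (f z) 0)).
  assert (Hz : forall n, n <> n0 -> g n = 0).
  { intros n Hn. unfold g, enum_seq. destruct (enum n) eqn:E; auto. unfold pif.
    destruct (excluded_middle_informative (s = y)); auto. subst. exfalso. apply Hn. eapply Hu; eauto. }
  assert (Hv : g n0 = f y).
  { unfold g, enum_seq. rewrite Hn0. unfold pif. destruct (excluded_middle_informative (y = y)); tauto. }
  assert (Hc : Un_cv (sum_f_R0 g) (f y)).
  { intros eps Heps. exists n0. intros n Hn. rewrite (sum_f_R0_single _ n0 Hz n Hn), Hv.
    unfold R_dist; rewrite Rminus_diag, Rabs_R0; auto. }
  destruct (Un_cv_Series _ _ Hc) as [E1 E2]. split; [exact E1|]. rewrite sumS_Series; auto.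
Qed.

Lemma sumS_swap_nonneg (a : St -> St -> R) : (forall x y, 0 <= a x y) -> (forall x, summable (a x)) ->
  summable (fun x => sumS enum (a x)) ->
  (forall y, summable (fun x => a x y)) /\ summable (fun y => sumS enum (fun x => a x y)) /\
  sumS enum (fun y => sumS enum (fun x => a x y)) = sumS enum (fun x => sumS enum (a x)).
Proof.
  intros H0 H1 H2. destruct Henum as [He Hu].
  set (A := fun n m => match enum n with Some x => enum_seq (a x) m | None => 0 end).
  assert (HA0 : forall n m, 0 <= A n m). { intros; unfold A, enum_seq; destruct (enum n); destruct (enum m); auto; lra. }
  assert (HA1 : forall n, ex_series (A n)). { intro n; unfold A; destruct (enum n). apply H1. apply Series_zero_spec. }
  assert (Hin : enum_seq (fun x => sumS enum (a x)) = (fun n => Series (A n))).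
  { apply functional_extensionality; intro n. unfold enum_seq at 1, A. destruct (enum n).
    - apply sumS_Series, H1.
    - symmetry. apply Series_zero_spec. }
  assert (HA2 : ex_series (fun n => Series (A n))) by (rewrite <- Hin; exact H2).
  destruct (Series_Series_swap_nonneg A HA0 HA1 HA2) as [T1 [T2 T3]].
  assert (Hcol : forall m y, enum m = Some y -> (fun n => A n m) = enum_seq (fun x => a x y)).
  { intros m y Em. apply functional_extensionality; intro n. unfold A, enum_seq. rewrite Em. destruct (enum n); auto. }
  assert (Hy : forall y, summable (fun x => a x y)).
  { intro y. destruct (He y) as [m Em]. unfold summable. rewrite <- (Hcol m y Em). apply T1. }
  assert (Hout : enum_seq (fun y => sumS enum (fun x => a x y)) = (fun m => Series (fun n => A n m))).
  { apply functional_extensionality; intro m. unfold enum_seq at 1. destruct (enum m) eqn:Em.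
    - rewrite sumS_Series by apply Hy. rewrite (Hcol m s Em). auto.
    - rewrite (Series_ext _ (fun _ => 0)); [symmetry; apply Series_zero_spec|].
      intro n. unfold A, enum_seq. rewrite Em. destruct (enum n); auto. }
  assert (Hsy : summable (fun y => sumS enum (fun x => a x y))) by (unfold summable; rewrite Hout; auto).
  repeat split; auto.
  rewrite (sumS_Series _ Hsy), (sumS_Series _ H2), Hout, Hin. auto.
Qed.

Lemma sumS_swap_nonneg_eq (a : St -> St -> R) (s : St -> R) : (forall x y, 0 <= a x y) ->
  (forall x, summable (a x) /\ sumS enum (a x) = s x) -> summable s ->
  (forall y, summable (fun x => a x y)) /\ summable (fun y => sumS enum (fun x => a x y)) /\
  sumS enum (fun y => sumS enum (fun x => a x y)) = sumS enum s.
Proof.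
  intros H0 Ha Hs.
  assert (Hs' : summable (fun x => sumS enum (a x))) by (eapply summable_ext; [|exact Hs]; intro; symmetry; apply Ha).
  destruct (sumS_swap_nonneg a H0 (fun x => proj1 (Ha x)) Hs') as [T1 [T2 T3]].
  repeat split; auto. rewrite T3. apply sumS_ext, Ha.
Qed.

(* Fubini, from Tonelli applied to the nonnegative parts [b + a] and [b - a]. *)
Lemma sumS_swap (a b : St -> St -> R) : (forall x y, Rabs (a x y) <= b x y) ->
  (forall x, summable (b x)) -> summable (fun x => sumS enum (b x)) ->
  (forall x, summable (a x)) /\ summable (fun x => sumS enum (a x)) /\
  sumS enum (fun y => sumS enum (fun x => a x y)) = sumS enum (fun x => sumS enum (a x)).
Proof.
  intros Hab Hb1 Hb2.
  assert (Hba : forall x y, - b x y <= a x y <= b x y) by (intros; apply Rabs_le_between, Hab).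
  set (u := fun x y => b x y + a x y). set (v := fun x y => b x y - a x y).
  assert (Ha1 : forall x, summable (a x)) by (intro x; apply summable_Rabs_le with (b x); auto).
  assert (Hu1 : forall x, summable (u x)) by (intro x; apply summable_plus; auto).
  assert (Hv1 : forall x, summable (v x)) by (intro x; apply summable_minus; auto).
  assert (Hdom : forall w : St -> St -> R, (forall x y, 0 <= w x y <= 2 * b x y) -> (forall x, summable (w x)) ->
            summable (fun x => sumS enum (w x))).
  { intros w Hw Hw1. apply summable_Rabs_le with (fun x => 2 * sumS enum (b x)); [|apply summable_scal; auto].
    intro x. rewrite <- sumS_scal by auto. rewrite Rabs_right.
    - apply sumS_le; auto. apply summable_scal; auto. intro y; apply Hw.
    - apply Rle_ge, sumS_nonneg; auto. intro y; apply Hw. }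
  assert (Hu0 : forall x y, 0 <= u x y <= 2 * b x y) by (intros; unfold u; specialize (Hba x y); lra).
  assert (Hv0 : forall x y, 0 <= v x y <= 2 * b x y) by (intros; unfold v; specialize (Hba x y); lra).
  pose proof (Hdom u Hu0 Hu1) as Hu2. pose proof (Hdom v Hv0 Hv1) as Hv2.
  destruct (sumS_swap_nonneg u (fun x y => proj1 (Hu0 x y)) Hu1 Hu2) as [U1 [U2 U3]].
  destruct (sumS_swap_nonneg v (fun x y => proj1 (Hv0 x y)) Hv1 Hv2) as [V1 [V2 V3]].
  assert (Ea : forall x, sumS enum (a x) = / 2 * (sumS enum (u x) - sumS enum (v x))).
  { intro x. rewrite <- sumS_minus, <- sumS_scal by auto using summable_minus.
    apply sumS_ext. intro y; unfold u, v; field. }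
  assert (Ea' : forall y, sumS enum (fun x => a x y) =
                 / 2 * (sumS enum (fun x => u x y) - sumS enum (fun x => v x y))).
  { intro y. rewrite <- sumS_minus, <- sumS_scal by auto using summable_minus.
    apply sumS_ext. intro x; unfold u, v; field. }
  split; [|split].
  - exact Ha1.
  - eapply summable_ext; [intro x; symmetry; apply Ea|]. apply summable_scal, summable_minus; auto.
  - rewrite (sumS_ext _ _ Ea'), (sumS_ext _ _ Ea).
    rewrite !sumS_scal, !sumS_minus by auto using summable_minus.
    rewrite U3, V3. auto.
Qed.

Lemma sumS_monotone_cv (f : nat -> St -> R) (g : St -> R) C :
  (forall k x, 0 <= f k x) -> (forall k x, f k x <= f (S k) x) ->
  (forall x, Un_cv (fun k => f k x) (g x)) -> (forall k, summable (f k)) ->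
  (forall k, sumS enum (f k) <= C) ->
  summable g /\ Un_cv (fun k => sumS enum (f k)) (sumS enum g).
Proof.
  intros H0 Hi Hc Hs HC.
  destruct (Series_monotone_cv (fun k => enum_seq (f k)) (enum_seq g) C) as [M1 M2].
  - enum_cases.
  - enum_cases.
  - enum_cases. apply Un_cv_const.
  - exact Hs.
  - intro k. rewrite <- sumS_Series; auto.
  - split; auto. rewrite sumS_Series; auto.
    eapply Un_cv_ext; [|apply M2]. intro k; simpl. rewrite sumS_Series; auto.
Qed.

End StateSums.

Arguments enum_seq {St} enum f n.
Arguments summable {St} enum f.

Ltac pifs := unfold pif in *; repeat match goal with
  | |- context [excluded_middle_informative ?P] => destruct (excluded_middle_informative P)
  | H : context [excluded_middle_informative ?P] |- _ => destruct (excluded_middle_informative P)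
  end.

Lemma pif_true {A} (P : Prop) (a b : A) : P -> pif P a b = a.
Proof. intro; unfold pif; destruct (excluded_middle_informative P); tauto. Qed.

Lemma pif_false {A} (P : Prop) (a b : A) : ~ P -> pif P a b = b.
Proof. intro; unfold pif; destruct (excluded_middle_informative P); tauto. Qed.

Lemma pred_ext {T} (A B : T -> Prop) : (forall x, A x <-> B x) -> A = B.
Proof. intro H. apply functional_extensionality; intro x. apply propositional_extensionality; auto. Qed.

(** * Hitting probabilities *)

Section MarkovChain.
Variable St : Type.
Variable enum : nat -> option St.
Variable p : St -> St -> R.
Variable mu : St -> R.
Hypothesis Hch : chain_setting enum p mu.

Lemma chain_enum : is_enum St enum. Proof. apply Hch. Qed.
Lemma p_nonneg x y : 0 <= p x y. Proof. apply Hch. Qed.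
Lemma mu_nonneg x : 0 <= mu x. Proof. apply Hch. Qed.
Lemma detailed_balance x y : mu x * p x y = mu y * p y x. Proof. apply Hch. Qed.
Lemma chain_irreducible x y : exists n, path_pos St p n x y. Proof. apply Hch. Qed.

Lemma summable_sumS_one (f : St -> R) : infinite_sum (enum_seq enum f) 1 ->
  summable enum f /\ sumS enum f = 1.
Proof.
  intro H. apply is_series_Reals in H. split; [exists 1; exact H|].
  rewrite sumS_Series by (exists 1; exact H). apply is_series_unique, H.
Qed.

Lemma summable_p x : summable enum (p x) /\ sumS enum (p x) = 1.
Proof. apply summable_sumS_one, Hch. Qed.

Lemma summable_mu : summable enum mu /\ sumS enum mu = 1.
Proof. apply summable_sumS_one, Hch. Qed.

Lemma mu_invariant y : sumS enum (fun x => mu x * p x y) = mu y.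
Proof. apply Hch. Qed.

Lemma p_le1 x y : p x y <= 1.
Proof. rewrite <- (proj2 (summable_p x)). apply term_le_sumS; auto using chain_enum, p_nonneg. apply summable_p. Qed.

Lemma summable_mu_bounded f : (forall x, Rabs (f x) <= mu x) -> summable enum f.
Proof. intro H. apply summable_Rabs_le with mu; auto. apply summable_mu. Qed.

Lemma summable_p_mul x g c : (forall y, Rabs (g y) <= c) -> summable enum (fun y => p x y * g y).
Proof.
  intro H. apply summable_Rabs_le with (fun y => c * p x y); [|apply summable_scal, summable_p].
  intro y. rewrite Rabs_mult, Rabs_right by (apply Rle_ge, p_nonneg).
  rewrite Rmult_comm. apply Rmult_le_compat_r; auto using p_nonneg.
Qed.

Lemma summable_p_mul01 x g : (forall y, 0 <= g y <= 1) -> summable enum (fun y => p x y * g y).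
Proof. intro H. apply summable_p_mul with 1. intro y; specialize (H y). rewrite Rabs_right; lra. Qed.

Lemma sumS_p_mul01 x g : (forall y, 0 <= g y <= 1) -> 0 <= sumS enum (fun y => p x y * g y) <= 1.
Proof.
  intro H. split.
  - apply sumS_nonneg. apply summable_p_mul01; auto. intro y. apply Rmult_le_pos; [apply p_nonneg|apply H].
  - rewrite <- (proj2 (summable_p x)). apply sumS_le; [apply summable_p_mul01; auto|apply summable_p|].
    intro y. specialize (H y). pose proof (p_nonneg x y). nra.
Qed.

Lemma hitn_succ A B n x : hitn St enum p A B (S n) x =
  sumS enum (fun y => p x y * pif (B y) 0 (pif (A y) 1 (hitn St enum p A B n y))).
Proof. reflexivity. Qed.

Lemma hitn01 A B n x : 0 <= hitn St enum p A B n x <= 1.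
Proof. revert x; induction n; intro x; simpl; [lra|]. apply sumS_p_mul01. intro y. pifs; auto; lra. Qed.

Lemma summable_hitn_step A B n x :
  summable enum (fun y => p x y * pif (B y) 0 (pif (A y) 1 (hitn St enum p A B n y))).
Proof. apply summable_p_mul01. intro y; pifs; try lra; apply hitn01. Qed.

Lemma hitn_le_succ A B n x : hitn St enum p A B n x <= hitn St enum p A B (S n) x.
Proof.
  revert x; induction n; intro x.
  - simpl hitn at 1. apply hitn01.
  - rewrite (hitn_succ A B n x), (hitn_succ A B (S n) x).
    apply sumS_le; auto using summable_hitn_step.
    intro y. apply Rmult_le_compat_l; [apply p_nonneg|]. pifs; auto; lra.
Qed.

Lemma hitn_cv A B x : Un_cv (fun n => hitn St enum p A B n x) (hit enum p A B x).
Proof.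
  destruct (growing_cv (fun n => hitn St enum p A B n x)) as [l Hl].
  - intro n; apply hitn_le_succ.
  - exists 1. intros y [n ->]. apply hitn01.
  - unfold hit, lim. apply (epsilon_spec (inhabits 0) (fun l => Un_cv _ l)). exists l; auto.
Qed.

Lemma hitn_le_hit A B n x : hitn St enum p A B n x <= hit enum p A B x.
Proof. apply (growing_ineq (fun n => hitn St enum p A B n x)); [intro; apply hitn_le_succ|apply hitn_cv]. Qed.

Lemma hit01 A B x : 0 <= hit enum p A B x <= 1.
Proof.
  split.
  - eapply Rle_trans; [|apply (hitn_le_hit A B O)]. simpl; lra.
  - apply Rle_cv_lim with (fun n => hitn St enum p A B n x) (fun _ => 1);
      auto using hitn_cv, Un_cv_const. intro; apply hitn01.
Qed.

Lemma h01 A B y : 0 <= h enum p A B y <= 1.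
Proof. unfold h. pifs; try lra. apply hit01. Qed.

Lemma hit_first_step A B x : hit enum p A B x =
  sumS enum (fun y => p x y * pif (B y) 0 (pif (A y) 1 (hit enum p A B y))).
Proof.
  destruct (sumS_monotone_cv (enum := enum) (fun k y => p x y * pif (B y) 0 (pif (A y) 1 (hitn St enum p A B k y)))
     (fun y => p x y * pif (B y) 0 (pif (A y) 1 (hit enum p A B y))) 1) as [_ Hcv].
  - intros; apply Rmult_le_pos. apply p_nonneg. pifs; try lra; apply hitn01.
  - intros; apply Rmult_le_compat_l. apply p_nonneg. pifs; try lra; apply hitn_le_succ.
  - intro y. apply CV_mult. apply Un_cv_const. pifs; try apply Un_cv_const. apply hitn_cv.
  - intro k. apply summable_hitn_step.
  - intro k. apply sumS_p_mul01. intro y; pifs; try lra; apply hitn01.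
  - apply UL_sequence with (fun k => hitn St enum p A B (S k) x); [|exact Hcv].
    intros eps He. destruct (hitn_cv A B x eps He) as [N HN]. exists N. intros; apply HN; lia.
Qed.

Lemma hit_pos_step A B x y : 0 < p x y -> ~ B y -> (A y \/ 0 < hit enum p A B y) -> 0 < hit enum p A B x.
Proof.
  intros Hp HB HA. rewrite hit_first_step.
  eapply Rlt_le_trans; [|apply (term_le_sumS chain_enum _ y)].
  - cbv beta. rewrite pif_false by auto. apply Rmult_lt_0_compat; auto. pifs; try lra. destruct HA; tauto.
  - apply summable_p_mul01. intro z; pifs; try lra; apply hit01.
  - intro z. apply Rmult_le_pos. apply p_nonneg. pifs; try lra; apply hit01.
Qed.

Lemma summable_mu_p y : summable enum (fun x => mu x * p x y).
Proof.
  apply summable_mu_bounded. intro x.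
  pose proof (mu_nonneg x); pose proof (p_le1 x y); pose proof (p_nonneg x y).
  rewrite Rabs_right by (apply Rle_ge; nra). nra.
Qed.

Lemma mu_pos x : 0 < mu x.
Proof.
  assert (H0 : exists x0, 0 < mu x0).
  { apply NNPP. intro H. destruct summable_mu as [_ E].
    rewrite (sumS_ext _ (fun _ => 0)), sumS_zero in E; [lra|].
    intro z. destruct (Rle_lt_or_eq_dec 0 (mu z) (mu_nonneg z)); auto. exfalso; apply H; eauto. }
  destruct H0 as [x0 Hx0]. destruct (chain_irreducible x0 x) as [n Hn].
  revert x0 Hx0 Hn. induction n; intros x0 Hx0 Hn; simpl in Hn.
  - subst; auto.
  - destruct Hn as [z [Hz Hn]]. apply (IHn z); auto.
    rewrite <- mu_invariant. eapply Rlt_le_trans; [|apply (term_le_sumS chain_enum _ x0)].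
    + apply Rmult_lt_0_compat; auto.
    + apply summable_mu_p.
    + intro; apply Rmult_le_pos; [apply mu_nonneg|apply p_nonneg].
Qed.

Lemma sumS_mu_p_mul g : (forall y, 0 <= g y <= 1) ->
  summable enum (fun x => mu x * sumS enum (fun y => p x y * g y)) /\
  sumS enum (fun x => mu x * sumS enum (fun y => p x y * g y)) = sumS enum (fun y => mu y * g y).
Proof.
  intro Hg.
  set (a := fun x y => mu x * p x y * g y).
  assert (Ha0 : forall x y, 0 <= a x y).
  { intros; unfold a. pose proof (mu_nonneg x); pose proof (p_nonneg x y); specialize (Hg y).
    apply Rmult_le_pos; [nra|lra]. }
  assert (Hsa : forall x, summable enum (a x) /\ sumS enum (a x) = mu x * sumS enum (fun y => p x y * g y)).
  { intro x. rewrite <- sumS_scal by (apply summable_p_mul01; auto). split.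
    - eapply summable_ext; [|apply (summable_scal (mu x)), (summable_p_mul01 x g); auto]. intro y; unfold a; ring.
    - apply sumS_ext. intro; unfold a; ring. }
  assert (Ha2 : summable enum (fun x => sumS enum (a x))).
  { apply summable_mu_bounded. intro x. rewrite (proj2 (Hsa x)).
    pose proof (sumS_p_mul01 x g Hg). pose proof (mu_nonneg x).
    rewrite Rabs_right by (apply Rle_ge; nra). nra. }
  destruct (sumS_swap_nonneg chain_enum a Ha0 (fun x => proj1 (Hsa x)) Ha2) as [_ [_ T3]].
  split; [eapply summable_ext; [|apply Ha2]; apply Hsa|].
  rewrite <- (sumS_ext _ _ (fun x => proj2 (Hsa x))), <- T3. apply sumS_ext. intro y.
  rewrite <- mu_invariant, Rmult_comm, <- sumS_scal by apply summable_mu_p.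
  apply sumS_ext; intro; unfold a; ring.
Qed.

Lemma sqr_diff01 a b : 0 <= a <= 1 -> 0 <= b <= 1 -> 0 <= (a - b) * (a - b) <= 1.
Proof.
  intros. pose proof (Rle_0_sqr (a - b)). unfold Rsqr in *. split; [lra|].
  assert (0 <= (1 - (a - b)) * (1 + (a - b))) by (apply Rmult_le_pos; lra). nra.
Qed.

(* The Dirichlet form [sum_x mu x sum_y p x y (g x - g y)^2] of a harmonic [g] vanishes by invariance,
   so [g] is constant along every edge, hence constant by irreducibility. *)
Lemma bounded_harmonic_const g : (forall y, 0 <= g y <= 1) ->
  (forall x, g x = sumS enum (fun y => p x y * g y)) -> forall x y, g x = g y.
Proof.
  intros Hg Hh.
  set (d := fun x => sumS enum (fun y => p x y * ((g x - g y) * (g x - g y)))).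
  assert (Hd0 : forall x, summable enum (fun y => p x y * ((g x - g y) * (g x - g y)))).
  { intro x. apply summable_p_mul01. intro y; apply sqr_diff01; auto. }
  assert (Hg2 : forall y, 0 <= g y * g y <= 1) by (intro y; pose proof (Hg y); split; nra).
  assert (Hdb : forall x, 0 <= d x <= 1) by (intro x; apply sumS_p_mul01; intro y; apply sqr_diff01; auto).
  assert (Hd : forall x, d x = sumS enum (fun y => p x y * (g y * g y)) - g x * g x).
  { intro x. unfold d.
    rewrite (sumS_ext _ (fun y => (g x * g x * p x y + p x y * (g y * g y)) - (2 * g x) * (p x y * g y)))
      by (intro; ring).
    pose proof (summable_p x) as [Hp Hp1].
    pose proof (summable_p_mul01 x g Hg). pose proof (summable_p_mul01 x _ Hg2).
    rewrite sumS_minus, sumS_plus, !sumS_scal, Hp1, <- Hh by auto using summable_scal, summable_plus. ring. }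
  assert (Hmds : summable enum (fun x => mu x * d x)).
  { apply summable_mu_bounded. intro x. pose proof (mu_nonneg x); pose proof (Hdb x). rewrite Rabs_right; nra. }
  assert (Hmd : sumS enum (fun x => mu x * d x) = 0).
  { rewrite (sumS_ext _ (fun x => mu x * sumS enum (fun y => p x y * (g y * g y)) - mu x * (g x * g x)))
      by (intro; rewrite Hd; ring).
    rewrite sumS_minus, (proj2 (sumS_mu_p_mul _ Hg2)); [lra|apply (proj1 (sumS_mu_p_mul _ Hg2))|].
    apply summable_mu_bounded. intro x. pose proof (mu_nonneg x); pose proof (Hg2 x). rewrite Rabs_right; nra. }
  assert (Hdz : forall x, d x = 0).
  { intro x. assert (mu x * d x = 0).
    { apply (sumS_eq0_term chain_enum _ x Hmds); auto. intro z; pose proof (mu_nonneg z); pose proof (Hdb z); nra. }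
    pose proof (mu_pos x). destruct (Rmult_integral _ _ H); lra. }
  assert (Hedge : forall x y, 0 < p x y -> g x = g y).
  { intros x y Hxy. assert (p x y * ((g x - g y) * (g x - g y)) = 0).
    { apply (sumS_eq0_term chain_enum _ y (Hd0 x)), Hdz.
      intro z. apply Rmult_le_pos; [apply p_nonneg|apply (sqr_diff01 (g x) (g z)); auto]. }
    destruct (Rmult_integral _ _ H); [lra|]. destruct (Rmult_integral _ _ H0); lra. }
  intros x y. destruct (chain_irreducible x y) as [n Hn]. revert x Hn.
  induction n; intros x Hn; simpl in Hn; [subst; auto|].
  destruct Hn as [z [Hz Hn]]. rewrite (Hedge x z Hz). auto.
Qed.

(* Recurrence: [f = P_x[tau_T = oo]] is subharmonic with [mu f = mu (1_{T^c} f)],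
   so it vanishes on [T], hence is harmonic, hence constant [0]. *)
Lemma hit_recurrent T : (exists t, T t) -> forall x, hit enum p T (fun _ => False) x = 1.
Proof.
  intros [t Ht].
  set (f := fun x => 1 - hit enum p T (fun _ => False) x).
  assert (Hf : forall y, 0 <= f y <= 1) by (intro y; unfold f; pose proof (hit01 T (fun _ => False) y); lra).
  assert (Hg : forall y, 0 <= pif (T y) 0 (f y) <= 1) by (intro y; pifs; try lra; auto).
  assert (Hstep : forall x, f x = sumS enum (fun y => p x y * pif (T y) 0 (f y))).
  { intro x. unfold f at 1. rewrite hit_first_step, <- (proj2 (summable_p x)) at 1.
    rewrite <- sumS_minus; [|apply summable_p|apply summable_p_mul01; intro y; pifs; try lra; apply hit01].
    apply sumS_ext. intro y. unfold f; pifs; tauto || ring. }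
  assert (Hs1 : summable enum (fun x => mu x * f x)).
  { apply summable_mu_bounded. intro x. pose proof (mu_nonneg x); pose proof (Hf x). rewrite Rabs_right; nra. }
  assert (Hs2 : summable enum (fun x => mu x * pif (T x) 0 (f x))).
  { apply summable_mu_bounded. intro x. pose proof (mu_nonneg x); pose proof (Hg x). rewrite Rabs_right; nra. }
  assert (Hmu : sumS enum (fun x => mu x * f x - mu x * pif (T x) 0 (f x)) = 0).
  { rewrite sumS_minus by auto. rewrite <- (proj2 (sumS_mu_p_mul _ Hg)).
    assert (sumS enum (fun x => mu x * sumS enum (fun y => p x y * pif (T y) 0 (f y))) =
            sumS enum (fun x => mu x * f x)) by (apply sumS_ext; intro x; rewrite <- Hstep; auto).
    lra. }
  assert (HT : forall y, T y -> f y = 0).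
  { intros y Hy. assert (mu y * f y - mu y * pif (T y) 0 (f y) = 0).
    { apply (sumS_eq0_term chain_enum _ y (summable_minus _ _ Hs1 Hs2)); auto.
      intro z. pose proof (mu_nonneg z); pose proof (Hf z). pifs; nra. }
    rewrite pif_true in H by auto. pose proof (mu_pos y).
    destruct (Rmult_integral (mu y) (f y)); lra. }
  assert (Hharm : forall x, f x = sumS enum (fun y => p x y * f y)).
  { intro x. rewrite Hstep. apply sumS_ext. intro y. pifs; auto. rewrite HT; auto. }
  intro x. pose proof (bounded_harmonic_const f Hf Hharm x t) as E.
  rewrite (HT t Ht) in E. unfold f in E. lra.
Qed.

Lemma hitn_union A B C n x : (forall z, A z -> B z -> False) -> (forall z, A z -> C z -> False) ->
  (forall z, B z -> C z -> False) ->
  hitn St enum p A (fun z => B z \/ C z) n x + hitn St enum p B (fun z => A z \/ C z) n x =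
  hitn St enum p (fun z => A z \/ B z) C n x.
Proof.
  intros HAB HAC HBC. revert x; induction n; intro x; [simpl; lra|].
  rewrite !hitn_succ, <- sumS_plus by apply summable_hitn_step.
  apply sumS_ext. intro y. rewrite <- IHn. pifs; try tauto; try ring; exfalso; firstorder.
Qed.

Lemma hit_union A B C x : (forall z, A z -> B z -> False) -> (forall z, A z -> C z -> False) ->
  (forall z, B z -> C z -> False) ->
  hit enum p A (fun z => B z \/ C z) x + hit enum p B (fun z => A z \/ C z) x =
  hit enum p (fun z => A z \/ B z) C x.
Proof.
  intros. apply UL_sequence with (fun n => hitn St enum p (fun z => A z \/ B z) C n x); [|apply hitn_cv].
  eapply Un_cv_ext; [intro n; apply hitn_union; auto|]. apply CV_plus; apply hitn_cv.
Qed.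

Lemma hit_complement A B x : (forall z, A z -> B z -> False) -> (exists t, A t \/ B t) ->
  hit enum p A B x + hit enum p B A x = 1.
Proof.
  intros HAB Hne. pose proof (hit_union A B (fun _ => False) x HAB (fun _ _ H => H) (fun _ _ H => H)) as E. cbv beta in E.
  rewrite (pred_ext (fun z => B z \/ False) B), (pred_ext (fun z => A z \/ False) A) in E by tauto.
  rewrite E. apply hit_recurrent, Hne.
Qed.

(** * Taboo probabilities and first visits *)

(* [taboo T n x y] is the probability to be at [y] at time [n + 1] without visiting [T] at times [1 .. n]. *)
Fixpoint taboo (T : St -> Prop) (n : nat) (x y : St) : R :=
  match n with
  | O => p x y
  | S n => sumS enum (fun z => p x z * pif (T z) 0 (taboo T n z y))
  end.

Lemma taboo01 T n x y : 0 <= taboo T n x y <= 1.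
Proof.
  revert x; induction n; intro x; simpl; [split; [apply p_nonneg|apply p_le1]|].
  apply sumS_p_mul01. intro; pifs; try lra; auto.
Qed.

Lemma taboo_step_nonneg T x (f : St -> St -> R) : (forall z y, 0 <= f z y) ->
  forall z y, 0 <= p x z * pif (T z) 0 (f z y).
Proof. intros Hf z y. apply Rmult_le_pos; [apply p_nonneg|]. pifs; auto; lra. Qed.

Lemma taboo_summable T n x : summable enum (taboo T n x) /\ sumS enum (taboo T n x) <= 1.
Proof.
  revert x; induction n; intro x.
  - destruct (summable_p x) as [Hp Hp1]. split; [exact Hp|]. change (sumS enum (p x) <= 1). lra.
  - assert (Hs : forall z, 0 <= sumS enum (taboo T n z) <= 1).
    { intro z. split; [apply sumS_nonneg; [apply IHn|intro; apply taboo01]|apply IHn]. }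
    assert (Hg : forall z, 0 <= pif (T z) 0 (sumS enum (taboo T n z)) <= 1) by (intro z; pifs; auto; lra).
    destruct (sumS_swap_nonneg_eq chain_enum (fun z y => p x z * pif (T z) 0 (taboo T n z y))
                (fun z => p x z * pif (T z) 0 (sumS enum (taboo T n z)))) as [_ [Hsum Heq]].
    + apply taboo_step_nonneg. intros; apply taboo01.
    + intro z. apply sumS_mul_pif, IHn.
    + apply summable_p_mul01, Hg.
    + split; [exact Hsum|]. simpl. rewrite Heq. apply sumS_p_mul01, Hg.
Qed.

Lemma taboo_last_step T n x y : taboo T (S n) x y = sumS enum (fun z => taboo T n x z * pif (T z) 0 (p z y)).
Proof.
  revert x; induction n; intro x; [reflexivity|].
  set (q := fun z => sumS enum (fun w => taboo T n z w * pif (T w) 0 (p w y))).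
  assert (Hc : forall z, summable enum (fun w => taboo T n z w * pif (T w) 0 (p w y))).
  { intro z. apply summable_Rabs_le with (taboo T n z); [|apply taboo_summable].
    intro w. pose proof (taboo01 T n z w). pose proof (p_nonneg w y). pose proof (p_le1 w y).
    rewrite Rabs_right; pifs; nra. }
  assert (Hq : forall z, 0 <= q z <= 1).
  { intro z. split.
    - apply sumS_nonneg; auto. intro w. pose proof (taboo01 T n z w). pose proof (p_nonneg w y). pifs; nra.
    - eapply Rle_trans; [|apply (proj2 (taboo_summable T n z))]. apply sumS_le; auto; [apply taboo_summable|].
      intro w. pose proof (taboo01 T n z w). pose proof (p_nonneg w y). pose proof (p_le1 w y). pifs; nra. }
  destruct (sumS_swap_nonneg_eq chain_enum (fun z w => p x z * pif (T z) 0 (taboo T n z w * pif (T w) 0 (p w y)))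
              (fun z => p x z * pif (T z) 0 (q z))) as [_ [_ Heq]].
  - apply taboo_step_nonneg. intros z w. pose proof (taboo01 T n z w). pose proof (p_nonneg w y). pifs; nra.
  - intro z. apply sumS_mul_pif, Hc.
  - apply summable_p_mul01. intro z; pifs; auto; lra.
  - change (taboo T (S (S n)) x y) with (sumS enum (fun z => p x z * pif (T z) 0 (taboo T (S n) z y))).
    rewrite (sumS_ext _ (fun z => p x z * pif (T z) 0 (q z))) by (intro z; rewrite IHn; auto).
    rewrite <- Heq. apply sumS_ext. intro w. simpl.
    rewrite Rmult_comm, <- sumS_scal by (apply summable_p_mul01; intro; pifs; try lra; apply taboo01).
    apply sumS_ext. intro z. pifs; ring.
Qed.

Lemma taboo_reversible T n x y : mu x * taboo T n x y = mu y * taboo T n y x.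
Proof.
  revert x y; induction n; intros x y; [apply detailed_balance|].
  rewrite (taboo_last_step T n y x). simpl taboo.
  rewrite <- !sumS_scal.
  - apply sumS_ext. intro z. destruct (excluded_middle_informative (T z)).
    + rewrite !pif_true by auto; ring.
    + rewrite !pif_false by auto.
      transitivity ((mu x * p x z) * taboo T n z y); [ring|]. rewrite detailed_balance.
      transitivity (p z x * (mu z * taboo T n z y)); [ring|]. rewrite IHn. ring.
  - apply summable_Rabs_le with (taboo T n y); [|apply taboo_summable].
    intro w. pose proof (taboo01 T n y w). pose proof (p_nonneg w x). pose proof (p_le1 w x).
    rewrite Rabs_right; pifs; nra.
  - apply summable_p_mul01. intro; pifs; try lra; apply taboo01.
Qed.

(* [first_hit V y x = P_x[tau_y < tau_(V \ y)]]: the first point of [V] visited after time 0 is [y]. *)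
Definition first_hitn (V : St -> Prop) y n x := hitn St enum p (fun z => z = y) (fun z => V z /\ z <> y) n x.
Definition first_hit (V : St -> Prop) y x := hit enum p (fun z => z = y) (fun z => V z /\ z <> y) x.

(* Expected number of visits to [y] at times [1 .. n] before entering [V]. *)
Fixpoint taboo_green (V : St -> Prop) n x y : R :=
  match n with O => 0 | S n => taboo_green V n x y + taboo V n x y end.

Lemma taboo_green_bound V n x y : 0 <= taboo_green V n x y <= INR n.
Proof.
  induction n; simpl taboo_green; [simpl; lra|].
  pose proof (taboo01 V n x y). rewrite S_INR. lra.
Qed.

Lemma taboo_green_succ V n x y :
  taboo_green V (S n) x y = p x y + sumS enum (fun z => p x z * pif (V z) 0 (taboo_green V n z y)).
Proof.
  induction n.
  - simpl. rewrite (sumS_ext _ (fun _ => 0)) by (intro; pifs; ring). rewrite sumS_zero; ring.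
  - change (taboo_green V (S (S n)) x y) with (taboo_green V (S n) x y + taboo V (S n) x y). rewrite IHn.
    simpl taboo. rewrite Rplus_assoc, <- sumS_plus.
    + f_equal. apply sumS_ext. intro z; simpl; pifs; ring.
    + apply summable_p_mul with (INR n). intro z. pose proof (taboo_green_bound V n z y).
      pose proof (pos_INR n). pifs; [rewrite Rabs_R0|rewrite Rabs_right]; lra.
    + apply summable_p_mul01. intro z; pifs; try lra; apply taboo01.
Qed.

Lemma first_hitn_taboo_green V y n x : V y -> first_hitn V y n x = taboo_green V n x y.
Proof.
  intro Vy. unfold first_hitn. revert x; induction n; intro x; [reflexivity|].
  rewrite hitn_succ, taboo_green_succ.
  destruct (sumS_single chain_enum (p x) y) as [Hs Hy].
  rewrite (sumS_ext _ (fun z => pif (z = y) (p x z) 0 +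
            p x z * pif (V z) 0 (hitn St enum p (fun z => z = y) (fun z => V z /\ z <> y) n z))).
  - rewrite sumS_plus, Hy; [|exact Hs|apply summable_p_mul01; intro; pifs; try lra; apply hitn01].
    f_equal. apply sumS_ext. intro z. rewrite IHn; auto.
  - intro z. pifs; subst; tauto || ring.
Qed.

Lemma taboo_green_reversible V n x y : mu x * taboo_green V n x y = mu y * taboo_green V n y x.
Proof. induction n; simpl; [ring|]. rewrite !Rmult_plus_distr_l, IHn, taboo_reversible. auto. Qed.

Lemma first_hit01 V y x : 0 <= first_hit V y x <= 1.
Proof. apply hit01. Qed.

Lemma first_hit_reversible V x y : V x -> V y -> mu x * first_hit V y x = mu y * first_hit V x y.
Proof.
  intros Vx Vy. apply UL_sequence with (fun n => mu x * first_hitn V y n x).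
  - apply CV_mult; [apply Un_cv_const|apply hitn_cv].
  - apply Un_cv_ext with (fun n => mu y * first_hitn V x n y).
    + intro n. rewrite !first_hitn_taboo_green by auto. symmetry. apply taboo_green_reversible.
    + apply CV_mult; [apply Un_cv_const|apply hitn_cv].
Qed.

Lemma first_hitn01 V y n x : 0 <= first_hitn V y n x <= 1.
Proof. apply hitn01. Qed.

(* [E_x[phi(X_tau); tau <= n]] for the first visit time [tau] to [V]. *)
Definition first_visit_mean V (phi : St -> R) n x :=
  sumS enum (fun y => pif (V y) (first_hitn V y n x * phi y) 0).

Lemma first_visit_mean_zero V phi x : first_visit_mean V phi 0 x = 0.
Proof.
  unfold first_visit_mean. rewrite (sumS_ext _ (fun _ => 0)); [apply sumS_zero|].
  intro y; unfold first_hitn; simpl; pifs; ring.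
Qed.

Lemma first_visit_mean_succ_aux V phi n : (forall y, 0 <= phi y <= 1) ->
  (forall x, summable enum (fun y => pif (V y) (first_hitn V y n x * phi y) 0) /\
             0 <= first_visit_mean V phi n x <= 1) ->
  forall x, summable enum (fun y => pif (V y) (first_hitn V y (S n) x * phi y) 0) /\
    first_visit_mean V phi (S n) x = sumS enum (fun z => p x z * pif (V z) (phi z) (first_visit_mean V phi n z)).
Proof.
  intros Hphi Hc x.
  set (c := fun z y => pif (V z /\ z <> y) 0 (pif (z = y) 1 (first_hitn V y n z))).
  set (a := fun z y => p x z * pif (V y) (c z y * phi y) 0).
  assert (Ha0 : forall z y, 0 <= a z y).
  { intros; unfold a, c. apply Rmult_le_pos; [apply p_nonneg|].
    pose proof (first_hitn01 V y n z). specialize (Hphi y). pifs; nra. }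
  assert (Hsa : forall z, summable enum (a z) /\
                 sumS enum (a z) = p x z * pif (V z) (phi z) (first_visit_mean V phi n z)).
  { intro z. destruct (excluded_middle_informative (V z)) as [Vz|Vz].
    - rewrite pif_true by auto.
      destruct (sumS_single chain_enum (fun _ => p x z * phi z) z) as [S1 S2].
      assert (E : forall y, pif (y = z) (p x z * phi z) 0 = a z y) by (intro y; unfold a, c; pifs; subst; tauto || ring).
      split; [eapply summable_ext; [exact E|exact S1]|]. rewrite <- (sumS_ext _ _ E). exact S2.
    - rewrite pif_false by auto.
      assert (E : forall y, p x z * pif (V y) (first_hitn V y n z * phi y) 0 = a z y)
        by (intro y; unfold a, c; pifs; subst; tauto || ring).
      split; [eapply summable_ext; [exact E|apply summable_scal, Hc]|].
      rewrite <- (sumS_ext _ _ E). apply sumS_scal, Hc. }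
  destruct (sumS_swap_nonneg_eq chain_enum a _ Ha0 Hsa) as [_ [T2 T3]].
  { apply summable_p_mul01. intro z. pifs; auto. apply Hc. }
  assert (Hrel : forall y, pif (V y) (first_hitn V y (S n) x * phi y) 0 = sumS enum (fun z => a z y)).
  { intro y. unfold first_hitn. rewrite hitn_succ. destruct (excluded_middle_informative (V y)).
    - rewrite pif_true, Rmult_comm, <- sumS_scal by (auto; apply summable_hitn_step).
      apply sumS_ext. intro z. unfold a, c, first_hitn. rewrite (pif_true (V y)) by auto. ring.
    - rewrite pif_false by auto. rewrite (sumS_ext _ (fun _ => 0)); [symmetry; apply sumS_zero|].
      intro z. unfold a. rewrite pif_false by auto. ring. }
  split; [exact (summable_ext _ _ (fun y => eq_sym (Hrel y)) T2)|].
  unfold first_visit_mean at 1. rewrite (sumS_ext _ _ Hrel), T3. reflexivity.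
Qed.

Lemma first_visit_mean_bounds V phi n : (forall y, 0 <= phi y <= 1) ->
  forall x, summable enum (fun y => pif (V y) (first_hitn V y n x * phi y) 0) /\
            0 <= first_visit_mean V phi n x <= 1.
Proof.
  intros Hphi. induction n; intro x.
  - rewrite first_visit_mean_zero. split; [|lra].
    eapply summable_ext; [|apply summable_zero]. intro y; unfold first_hitn; simpl; pifs; ring.
  - destruct (first_visit_mean_succ_aux V phi n Hphi IHn x) as [H1 H2]. split; auto.
    rewrite H2. apply sumS_p_mul01. intro z. pifs; auto. apply IHn.
Qed.

Lemma first_visit_mean_succ V phi n x : (forall y, 0 <= phi y <= 1) ->
  first_visit_mean V phi (S n) x = sumS enum (fun z => p x z * pif (V z) (phi z) (first_visit_mean V phi n z)).
Proof. intro Hphi. apply (first_visit_mean_succ_aux V phi n Hphi (first_visit_mean_bounds V phi n Hphi)). Qed.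

Lemma first_visit_mean_cv V phi x : (forall y, 0 <= phi y <= 1) ->
  summable enum (fun y => pif (V y) (first_hit V y x * phi y) 0) /\
  Un_cv (fun n => first_visit_mean V phi n x) (sumS enum (fun y => pif (V y) (first_hit V y x * phi y) 0)).
Proof.
  intro Hphi.
  apply (sumS_monotone_cv (fun k y => pif (V y) (first_hitn V y k x * phi y) 0) _ 1).
  - intros; pifs; try lra. apply Rmult_le_pos; [apply first_hitn01|apply Hphi].
  - intros; pifs; try lra. apply Rmult_le_compat_r; [apply Hphi|apply hitn_le_succ].
  - intro y. pifs; [apply CV_mult; [apply hitn_cv|]|]; apply Un_cv_const.
  - intro k. apply first_visit_mean_bounds; auto.
  - intro k. apply first_visit_mean_bounds; auto.
Qed.

(* Strong Markov property at the first visit to [V], which happens before (or at) [tau_A] and [tau_B].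
   Both sides solve the same recursion, so [hitn] and [first_visit_mean] sandwich each other. *)
Lemma hit_first_visit_decomp V A B x :
  (forall z, A z -> B z -> False) -> (forall z, A z -> V z) -> (forall z, B z -> V z) ->
  summable enum (fun y => pif (V y) (first_hit V y x * h enum p A B y) 0) /\
  hit enum p A B x = sumS enum (fun y => pif (V y) (first_hit V y x * h enum p A B y) 0).
Proof.
  intros HAB HAV HBV.
  set (phi := h enum p A B). assert (Hphi : forall y, 0 <= phi y <= 1) by apply h01.
  destruct (first_visit_mean_cv V phi x Hphi) as [L1 L2]. split; auto.
  assert (Hsum : forall n, summable enum (fun z => p x z * pif (V z) (phi z) (first_visit_mean V phi n z))).
  { intros n. apply summable_p_mul01. intro; pifs; auto; apply first_visit_mean_bounds; auto. }
  assert (I1 : forall n x, hitn St enum p A B n x <= first_visit_mean V phi n x).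
  { induction n; intro z; [simpl; apply first_visit_mean_bounds; auto|].
    rewrite hitn_succ, first_visit_mean_succ by auto.
    apply sumS_le; [apply summable_hitn_step|apply summable_p_mul01; intro; pifs; auto; apply first_visit_mean_bounds; auto|].
    intro y. apply Rmult_le_compat_l; [apply p_nonneg|]. unfold phi, h.
    pifs; try lra; try (exfalso; eauto; fail); first [apply hitn_le_hit | apply IHn | apply hitn01]. }
  assert (I2 : forall n x, first_visit_mean V phi n x <= hit enum p A B x).
  { induction n; intro z; [rewrite first_visit_mean_zero; apply hit01|].
    rewrite first_visit_mean_succ, (hit_first_step A B z) by auto.
    apply sumS_le; [apply summable_p_mul01; intro; pifs; auto; apply first_visit_mean_bounds; auto
                   |apply summable_p_mul01; intro; pifs; try lra; apply hit01|].
    intro y. apply Rmult_le_compat_l; [apply p_nonneg|]. unfold phi, h.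
    pifs; try lra; try (exfalso; eauto; fail); first [apply IHn | apply hit01 | apply first_visit_mean_bounds; auto]. }
  apply Rle_antisym.
  - apply Rle_cv_lim with (fun n => hitn St enum p A B n x) (fun n => first_visit_mean V phi n x); auto using hitn_cv.
  - apply Rle_cv_lim with (fun n => first_visit_mean V phi n x) (fun _ => hit enum p A B x); auto using Un_cv_const.
Qed.

Lemma sumS_first_hit V x : summable enum (fun y => pif (V y) (first_hit V y x) 0) /\
  sumS enum (fun y => pif (V y) (first_hit V y x) 0) = hit enum p V (fun _ => False) x.
Proof.
  destruct (hit_first_visit_decomp V V (fun _ => False) x) as [S1 S2]; [tauto|auto|tauto|].
  assert (E : forall y, pif (V y) (first_hit V y x * h enum p V (fun _ => False) y) 0 = pif (V y) (first_hit V y x) 0)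
    by (intro y; unfold h; pifs; tauto || ring).
  split; [exact (summable_ext _ _ E S1)|]. rewrite S2. symmetry. apply sumS_ext, E.
Qed.

Lemma summable_first_hit V W x g : (forall y, W y -> V y) -> (forall y, Rabs (g y) <= 1) ->
  summable enum (fun y => pif (W y) (first_hit V y x * g y) 0).
Proof.
  intros HW Hg. apply summable_Rabs_le with (fun y => pif (V y) (first_hit V y x) 0); [|apply sumS_first_hit].
  intro y. specialize (Hg y). pose proof (first_hit01 V y x). pifs; try (exfalso; auto; fail).
  - rewrite Rabs_mult, (Rabs_right (first_hit V y x)) by lra. nra.
  - rewrite Rabs_R0; lra.
  - rewrite Rabs_R0; lra.
Qed.

Lemma summable_first_hit_indicator V W x : (forall y, W y -> V y) ->
  summable enum (fun y => pif (W y) (first_hit V y x) 0).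
Proof.
  intro HW. eapply summable_ext; [|apply (summable_first_hit V W x (fun _ => 1)); auto].
  - intro; pifs; ring.
  - intro; rewrite Rabs_R1; lra.
Qed.

Lemma sumS_first_hit_bound V W x g : (forall y, W y -> V y) -> (forall y, Rabs (g y) <= 1) ->
  Rabs (sumS enum (fun y => pif (W y) (first_hit V y x * g y) 0)) <= 1.
Proof.
  intros HW Hg.
  destruct (sumS_first_hit V x) as [S1 S2].
  assert (Hb : sumS enum (fun y => pif (V y) (first_hit V y x) 0) <= 1) by (rewrite S2; apply hit01).
  assert (Hs := summable_first_hit V W x g HW Hg).
  assert (Hpt : forall y, - pif (V y) (first_hit V y x) 0 <= pif (W y) (first_hit V y x * g y) 0 <=
                          pif (V y) (first_hit V y x) 0).
  { intro y. specialize (Hg y); apply Rabs_le_between in Hg.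
    pose proof (first_hit01 V y x). specialize (HW y). pifs; try tauto; split; nra. }
  apply Rabs_le. split.
  - assert (sumS enum (fun y => -1 * pif (V y) (first_hit V y x) 0) <=
            sumS enum (fun y => pif (W y) (first_hit V y x * g y) 0)).
    { apply sumS_le; [apply summable_scal, S1|exact Hs|]. intro y; specialize (Hpt y); lra. }
    rewrite sumS_scal in H by exact S1. lra.
  - assert (sumS enum (fun y => pif (W y) (first_hit V y x * g y) 0) <=
            sumS enum (fun y => pif (V y) (first_hit V y x) 0)) by (apply sumS_le; auto; intro y; apply Hpt).
    lra.
Qed.

Lemma sumS_first_hit_indicator_bound V W x : (forall y, W y -> V y) ->
  Rabs (sumS enum (fun y => pif (W y) (first_hit V y x) 0)) <= 1.
Proof.
  intro HW. rewrite (sumS_ext _ (fun y => pif (W y) (first_hit V y x * 1) 0)) by (intro; pifs; ring).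
  apply sumS_first_hit_bound; auto. intro; rewrite Rabs_R1; lra.
Qed.

(* By reversibility [mu x first_hit V y x] is symmetric in [x, y], so the double sum of an antisymmetric
   integrand vanishes. *)
Lemma sumS_first_hit_antisym V W phi : (forall z, W z -> V z) -> (forall y, 0 <= phi y <= 1) ->
  sumS enum (fun x => pif (W x) (mu x * sumS enum (fun y => pif (W y) (first_hit V y x * (phi x - phi y)) 0)) 0) = 0.
Proof.
  intros HWV Hphi.
  assert (Hd : forall x y, Rabs (phi x - phi y) <= 1).
  { intros. pose proof (Hphi x); pose proof (Hphi y). apply Rabs_le; lra. }
  set (a := fun x y => pif (W x) (pif (W y) (mu x * first_hit V y x * (phi x - phi y)) 0) 0).
  set (b := fun x y => mu x * pif (V y) (first_hit V y x) 0).
  assert (Hab : forall x y, Rabs (a x y) <= b x y).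
  { intros x y. unfold a, b. pose proof (mu_nonneg x). pose proof (first_hit01 V y x).
    specialize (Hd x y). specialize (HWV y).
    pifs; try tauto; rewrite ?Rabs_R0; try nra.
    rewrite Rabs_mult, (Rabs_right (mu x * first_hit V y x)) by nra.
    rewrite <- (Rmult_1_r (mu x * first_hit V y x)) at 2. apply Rmult_le_compat_l; nra. }
  assert (Hb1 : forall x, summable enum (b x)) by (intro x; apply summable_scal, sumS_first_hit).
  assert (Hb2 : summable enum (fun x => sumS enum (b x))).
  { apply summable_mu_bounded. intro x. unfold b.
    rewrite sumS_scal, (proj2 (sumS_first_hit V x)) by apply sumS_first_hit.
    pose proof (mu_nonneg x); pose proof (hit01 V (fun _ => False) x). rewrite Rabs_right; nra. }
  destruct (sumS_swap chain_enum a b Hab Hb1 Hb2) as [F1 [F2 F3]].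
  assert (Anti : forall x y, a y x = - a x y).
  { intros x y. unfold a. pifs; try ring. rewrite (Rmult_comm (mu y)), first_hit_reversible by auto. ring. }
  assert (E : sumS enum (fun y => sumS enum (fun x => a x y)) = - sumS enum (fun x => sumS enum (a x))).
  { rewrite (sumS_ext _ (fun y => -1 * sumS enum (a y))); [rewrite sumS_scal by auto; ring|].
    intro y. rewrite <- sumS_scal by auto. apply sumS_ext. intro x. rewrite Anti. ring. }
  rewrite F3 in E.
  transitivity (sumS enum (fun x => sumS enum (a x))); [|lra].
  apply sumS_ext. intro x. unfold a. destruct (excluded_middle_informative (W x)).
  - rewrite pif_true, <- sumS_scal by (auto; apply summable_first_hit; auto).
    apply sumS_ext. intro y. pifs; tauto || ring.
  - rewrite pif_false by auto. rewrite (sumS_ext _ (fun _ => 0)); [symmetry; apply sumS_zero|].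
    intro; rewrite pif_false; auto.
Qed.

Lemma hit_pos_path A B : (forall z, A z -> B z -> False) -> forall n z b, B b -> path_pos St p (S n) z b ->
  (exists x, A x /\ 0 < hit enum p B A x) \/ 0 < hit enum p B A z.
Proof.
  intros HAB n. induction n; intros z b Hb Hp; simpl in Hp; destruct Hp as [w [Hzw Hw]].
  - simpl in Hw; subst w. right. apply (hit_pos_step B A z b); auto. intro; eauto.
  - destruct (IHn w b Hb Hw) as [H|H]; [left; auto|].
    destruct (excluded_middle_informative (A w)); [left; eauto|].
    right. apply (hit_pos_step B A z w); auto.
Qed.

Lemma cap_pos A B : (forall z, A z -> B z -> False) -> (exists a, A a) -> (exists b, B b) ->
  0 < cap enum p mu A B.
Proof.
  intros HAB [a Ha] [b Hb]. destruct (chain_irreducible a b) as [n Hn].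
  destruct n; [simpl in Hn; subst; exfalso; eauto|].
  assert (E : exists x, A x /\ 0 < hit enum p B A x) by (destruct (hit_pos_path A B HAB n a b Hb Hn); eauto).
  destruct E as [x [Hx Hpos]]. unfold cap, sumIn.
  eapply Rlt_le_trans; [|apply (term_le_sumS chain_enum _ x)].
  - cbv beta. rewrite pif_true by auto. apply Rmult_lt_0_compat; auto using mu_pos.
  - apply summable_mu_bounded. intro z. pose proof (mu_nonneg z); pose proof (hit01 B A z).
    pifs; [rewrite Rabs_right|rewrite Rabs_R0]; nra.
  - intro z. pose proof (mu_nonneg z); pose proof (hit01 B A z). pifs; nra.
Qed.

Lemma summable_mu_pif (W : St -> Prop) g : (forall x, Rabs (g x) <= 1) ->
  summable enum (fun x => pif (W x) (mu x * g x) 0).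
Proof.
  intro Hg. apply summable_mu_bounded. intro x. pose proof (mu_nonneg x). specialize (Hg x).
  pifs; [rewrite Rabs_mult, Rabs_right by lra; nra|rewrite Rabs_R0; lra].
Qed.

Lemma sumS_first_hit_transpose V P Q : (forall z, P z -> V z) -> (forall z, Q z -> V z) ->
  sumS enum (fun x => pif (P x) (mu x * sumS enum (fun y => pif (Q y) (first_hit V y x) 0)) 0) =
  sumS enum (fun y => pif (Q y) (mu y * sumS enum (fun x => pif (P x) (first_hit V x y) 0)) 0).
Proof.
  intros HP HQ.
  set (a := fun x y => pif (P x) (mu x * pif (Q y) (first_hit V y x) 0) 0).
  assert (Ha0 : forall x y, 0 <= a x y).
  { intros; unfold a. pose proof (mu_nonneg x); pose proof (first_hit01 V y x). pifs; nra. }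
  destruct (sumS_swap_nonneg_eq chain_enum a
              (fun x => pif (P x) (mu x * sumS enum (fun y => pif (Q y) (first_hit V y x) 0)) 0) Ha0)
    as [_ [_ T3]].
  - intro x. unfold a.
    assert (HQs := summable_first_hit_indicator V Q x HQ).
    destruct (sumS_pif (enum := enum) (P x) (fun y => mu x * pif (Q y) (first_hit V y x) 0)) as [S1 S2];
      [apply summable_scal, HQs|].
    split; [exact S1|]. rewrite S2, sumS_scal by exact HQs. reflexivity.
  - apply summable_mu_pif. intro x. apply sumS_first_hit_indicator_bound, HQ.
  - rewrite <- T3. apply sumS_ext. intro y. unfold a. destruct (excluded_middle_informative (Q y)).
    + rewrite (pif_true (Q y)), <- sumS_scal by (auto; apply summable_first_hit_indicator; auto).
      apply sumS_ext. intro x. pifs; try tauto; try ring. rewrite first_hit_reversible; auto; ring.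
    + rewrite (pif_false (Q y)) by auto. rewrite (sumS_ext _ (fun _ => 0)); [apply sumS_zero|].
      intro; pifs; tauto || ring.
Qed.

Lemma hitn_monotone A A' B n x : (forall z, A z -> A' z) -> hitn St enum p A B n x <= hitn St enum p A' B n x.
Proof.
  intro HA. revert x; induction n; intro x; [simpl; lra|].
  rewrite !hitn_succ. apply sumS_le; try apply summable_hitn_step.
  intro y. apply Rmult_le_compat_l; [apply p_nonneg|].
  pifs; try lra; try (exfalso; eauto; fail); auto; apply hitn01.
Qed.

Lemma hit_monotone A A' B x : (forall z, A z -> A' z) -> hit enum p A B x <= hit enum p A' B x.
Proof.
  intro HA. apply Rle_cv_lim with (fun n => hitn St enum p A B n x) (fun n => hitn St enum p A' B n x);
    auto using hitn_cv, hitn_monotone.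
Qed.

Lemma hit_first_hit V A B x : (forall z, A z -> B z -> False) -> (forall z, A z -> V z) -> (forall z, B z -> V z) ->
  (forall z, V z -> A z \/ B z) ->
  hit enum p A B x = sumS enum (fun y => pif (A y) (first_hit V y x) 0).
Proof.
  intros HAB HA HB HV. rewrite (proj2 (hit_first_visit_decomp V A B x HAB HA HB)).
  apply sumS_ext. intro y. unfold h.
  destruct (excluded_middle_informative (V y)) as [Vy|Vy]; [destruct (HV y Vy)|].
  - rewrite !pif_true by auto; ring.
  - rewrite pif_true, pif_false, pif_true, pif_false by (auto; intro; eauto); ring.
  - rewrite !pif_false by auto; auto.
Qed.

Lemma h_diff_bound A B x y : Rabs (h enum p A B x - h enum p A B y) <= 1.
Proof. pose proof (h01 A B x); pose proof (h01 A B y). apply Rabs_le; lra. Qed.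

Lemma sumS_first_hit_h_diff V A B x :
  (forall z, A z -> B z -> False) -> (forall z, A z -> V z) -> (forall z, B z -> V z) -> (exists t, V t) ->
  sumS enum (fun y => pif (V y) (first_hit V y x * (h enum p A B x - h enum p A B y)) 0) =
  h enum p A B x - hit enum p A B x.
Proof.
  intros HAB HA HB Hne. destruct (sumS_first_hit V x) as [S1 S2].
  destruct (hit_first_visit_decomp V A B x HAB HA HB) as [D1 D2].
  rewrite (sumS_ext _ (fun y => h enum p A B x * pif (V y) (first_hit V y x) 0 -
                                pif (V y) (first_hit V y x * h enum p A B y) 0)) by (intro; pifs; ring).
  rewrite sumS_minus, sumS_scal, S2, <- D2, hit_recurrent by auto using summable_scal. ring.
Qed.

Lemma sumS_first_hit_split V W1 W2 g x : (forall z, V z <-> W1 z \/ W2 z) -> (forall z, W1 z -> W2 z -> False) ->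
  (forall y, Rabs (g y) <= 1) ->
  sumS enum (fun y => pif (V y) (first_hit V y x * g y) 0) =
  sumS enum (fun y => pif (W1 y) (first_hit V y x * g y) 0) + sumS enum (fun y => pif (W2 y) (first_hit V y x * g y) 0).
Proof.
  intros HV H12 Hg. rewrite <- sumS_plus by (apply summable_first_hit; auto; intros; apply HV; auto).
  apply sumS_ext. intro y. specialize (HV y). pifs; try tauto; try ring. exfalso; eauto.
Qed.

(** * Capacities of harmonic neighbourhoods *)

Lemma h_sub_hit A B x : (forall z, A z -> B z -> False) -> (exists a, A a) -> ~ B x ->
  h enum p A B x - hit enum p A B x = pif (A x) (hit enum p B A x) 0.
Proof.
  intros HAB [a Ha] HBx. unfold h. destruct (excluded_middle_informative (A x)).
  - rewrite !pif_true by auto. pose proof (hit_complement A B x HAB (ex_intro _ a (or_introl Ha))). lra.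
  - rewrite !pif_false by auto. ring.
Qed.

(* Decompose at the first visit to [U1 \/ U2]; the part of the sum returning to [U1] cancels by
   [sumS_first_hit_antisym]. *)
Lemma cap_first_hit_repr A B U1 U2 :
  (forall z, A z -> B z -> False) -> (exists a, A a) ->
  (forall z, A z -> U1 z) -> (forall z, B z -> U2 z) -> (forall z, U1 z -> U2 z -> False) ->
  cap enum p mu A B = sumS enum (fun x => pif (U1 x) (mu x * sumS enum (fun y =>
    pif (U2 y) (first_hit (fun z => U1 z \/ U2 z) y x * (h enum p A B x - h enum p A B y)) 0)) 0).
Proof.
  intros HAB Ha HA1 HB2 H12.
  set (V := fun z => U1 z \/ U2 z).
  set (inner := fun W x => sumS enum (fun y => pif (W y) (first_hit V y x * (h enum p A B x - h enum p A B y)) 0)).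
  assert (Hrow : forall x, U1 x -> inner U1 x + inner U2 x = pif (A x) (hit enum p B A x) 0).
  { intros x Hx. unfold inner. rewrite <- (sumS_first_hit_split V U1 U2); unfold V; try tauto.
    - rewrite sumS_first_hit_h_diff by (auto; destruct Ha; eauto). apply h_sub_hit; eauto.
    - intro; apply h_diff_bound. }
  assert (Hs : forall W, (forall y, W y -> V y) -> summable enum (fun x => pif (U1 x) (mu x * inner W x) 0)).
  { intros W HW. apply summable_mu_pif. intro x. apply sumS_first_hit_bound; auto. intro; apply h_diff_bound. }
  assert (Hcap : cap enum p mu A B =
            sumS enum (fun x => pif (U1 x) (mu x * inner U1 x) 0) + sumS enum (fun x => pif (U1 x) (mu x * inner U2 x) 0)).
  { rewrite <- sumS_plus by (apply Hs; unfold V; auto). unfold cap, sumIn. apply sumS_ext. intro x.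
    destruct (excluded_middle_informative (U1 x)).
    - rewrite !(pif_true (U1 x)), <- Rmult_plus_distr_l, Hrow by auto. pifs; ring.
    - rewrite !(pif_false (U1 x)), pif_false by (auto; intro; eauto). ring. }
  rewrite Hcap. unfold inner at 1. rewrite (sumS_first_hit_antisym V U1 (h enum p A B)); [apply Rplus_0_l| |apply h01].
  unfold V; auto.
Qed.

Lemma cap_first_hit U1 U2 : (forall z, U1 z -> U2 z -> False) ->
  cap enum p mu U1 U2 = sumS enum (fun x => pif (U1 x) (mu x *
    sumS enum (fun y => pif (U2 y) (first_hit (fun z => U1 z \/ U2 z) y x) 0)) 0).
Proof.
  intro H12. unfold cap, sumIn. apply sumS_ext. intro x.
  rewrite (hit_first_hit (fun z => U1 z \/ U2 z) U2 U1); auto; firstorder.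
Qed.

(* On [U1] the potential is [>= 1 - d] and on [U2] it is [<= d], so the increments [h x - h y] in
   [cap_first_hit_repr] lie in [[1 - 2 d, 1]]. *)
Lemma cap_harm_nbhd_bounds A B U1 U2 d :
  (forall z, A z -> B z -> False) -> (exists a, A a) -> (exists b, B b) ->
  (forall z, A z -> U1 z) -> (forall z, B z -> U2 z) -> (forall z, U1 z -> U2 z -> False) ->
  (forall x, U1 x -> 1 - d <= h enum p A B x) -> (forall x, U2 x -> h enum p A B x <= d) ->
  (1 - 2 * d) * cap enum p mu U1 U2 <= cap enum p mu A B <= cap enum p mu U1 U2 /\ 0 < cap enum p mu A B.
Proof.
  intros HAB Ha Hb HA1 HB2 H12 Hd1 Hd2.
  set (V := fun x => U1 x \/ U2 x).
  assert (HVU2 : forall y, U2 y -> V y) by (unfold V; auto).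
  assert (HsU : forall x, summable enum (fun y => pif (U2 y) (first_hit V y x) 0))
    by (intro x; apply summable_first_hit_indicator; auto).
  assert (HsD : forall x, summable enum (fun y => pif (U2 y) (first_hit V y x * (h enum p A B x - h enum p A B y)) 0))
    by (intro x; apply summable_first_hit; auto; intro; apply h_diff_bound).
  assert (HbU : forall x, Rabs (sumS enum (fun y => pif (U2 y) (first_hit V y x) 0)) <= 1)
    by (intro x; apply sumS_first_hit_indicator_bound, HVU2).
  assert (HbD : forall x, Rabs (sumS enum (fun y => pif (U2 y) (first_hit V y x * (h enum p A B x - h enum p A B y)) 0)) <= 1)
    by (intro x; apply sumS_first_hit_bound; auto; intro; apply h_diff_bound).
  split; [|apply cap_pos; auto].
  rewrite (cap_first_hit_repr A B U1 U2), (cap_first_hit U1 U2) by auto. fold V.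
  split.
  - rewrite <- sumS_scal by (apply summable_mu_pif; auto).
    apply sumS_le; [apply summable_scal, summable_mu_pif; auto|apply summable_mu_pif; auto|].
    intro x. destruct (excluded_middle_informative (U1 x)) as [Hx|Hx]; [|rewrite !pif_false by auto; lra].
    rewrite !pif_true by auto. rewrite <- Rmult_assoc, (Rmult_comm _ (mu x)), Rmult_assoc.
    apply Rmult_le_compat_l; [apply mu_nonneg|]. rewrite <- sumS_scal by auto.
    apply sumS_le; auto using summable_scal.
    intro y. pose proof (first_hit01 V y x).
    destruct (excluded_middle_informative (U2 y)) as [Hy|Hy]; [|rewrite !pif_false by auto; lra].
    rewrite !pif_true by auto. specialize (Hd1 x Hx). specialize (Hd2 y Hy). nra.
  - apply sumS_le; [apply summable_mu_pif; auto|apply summable_mu_pif; auto|].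
    intro x. destruct (excluded_middle_informative (U1 x)); [|rewrite !pif_false by auto; lra].
    rewrite !pif_true by auto. apply Rmult_le_compat_l; [apply mu_nonneg|]. apply sumS_le; auto.
    intro y. pose proof (first_hit01 V y x).
    destruct (excluded_middle_informative (U2 y)); [|rewrite !pif_false by auto; lra].
    rewrite !pif_true by auto. pose proof (h01 A B x); pose proof (h01 A B y). nra.
Qed.

Section ThreeSets.
Variables Mi Mo X : St -> Prop.
Hypothesis HMM : forall z, Mi z -> Mo z -> False.
Hypothesis HXi : forall z, X z -> Mi z -> False.
Hypothesis HXo : forall z, X z -> Mo z -> False.

Let M z := Mi z \/ Mo z.
Let V z := X z \/ M z.

Lemma hit_first_hit_V_M x : hit enum p M X x = sumS enum (fun y => pif (M y) (first_hit V y x) 0).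
Proof. apply hit_first_hit; unfold V, M; [intros z [H|H] Hx; eauto|auto|auto|tauto]. Qed.

Lemma hit_first_hit_V_Mi x : hit enum p Mi (fun z => X z \/ Mo z) x = sumS enum (fun y => pif (Mi y) (first_hit V y x) 0).
Proof. apply hit_first_hit; unfold V, M; [intros z H [Hx|Hx]; eauto|auto|intros z [H|H]; auto|tauto]. Qed.

Lemma hit_first_hit_V_X y : hit enum p X M y = sumS enum (fun x => pif (X x) (first_hit V x y) 0).
Proof. apply hit_first_hit; unfold V, M; [intros z Hx [H|H]; eauto|auto|auto|tauto]. Qed.

Lemma sumS_first_hit_M_h_diff x : X x ->
  sumS enum (fun y => pif (M y) (first_hit V y x * (h enum p Mi Mo x - h enum p Mi Mo y)) 0) =
  hit enum p Mi Mo x * hit enum p M X x - hit enum p Mi (fun z => X z \/ Mo z) x.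
Proof.
  intro Hx. rewrite hit_first_hit_V_M, hit_first_hit_V_Mi.
  assert (HM : forall y, M y -> V y) by (unfold V; auto).
  assert (HMi : forall y, Mi y -> V y) by (unfold V, M; auto).
  rewrite (sumS_ext _ (fun y => hit enum p Mi Mo x * pif (M y) (first_hit V y x) 0 - pif (Mi y) (first_hit V y x) 0)).
  - rewrite sumS_minus, sumS_scal;
      auto using summable_scal, summable_first_hit_indicator.
  - intro y. unfold h. rewrite (pif_false (Mi x)), (pif_false (Mo x)) by eauto. unfold M.
    pifs; try tauto; try ring; exfalso; eauto.
Qed.

(* [h = hit Mi Mo] is harmonic on [X]; decomposing it at the first visit to [X \/ Mi \/ Mo] and cancelling
   the returns to [X] with [sumS_first_hit_antisym] gives the identity. *)
Lemma sumS_mu_hit_product : (exists a, Mi a) ->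
  sumS enum (fun x => pif (X x) (mu x * (hit enum p Mi Mo x * hit enum p M X x)) 0) =
  sumS enum (fun x => pif (X x) (mu x * hit enum p Mi (fun z => X z \/ Mo z) x) 0).
Proof.
  intros [a Ha].
  set (inner := fun W x => sumS enum (fun y => pif (W y) (first_hit V y x * (h enum p Mi Mo x - h enum p Mi Mo y)) 0)).
  assert (Hrow : forall x, X x -> inner X x + inner M x = 0).
  { intros x Hx. unfold inner. rewrite <- (sumS_first_hit_split V X M).
    - rewrite sumS_first_hit_h_diff.
      + unfold h. rewrite !pif_false by eauto. ring.
      + exact HMM.
      + unfold V, M; auto.
      + unfold V, M; auto.
      + exists a; unfold V, M; auto.
    - unfold V; tauto.
    - intros z Hz [H|H]; eauto.
    - intro; apply h_diff_bound. }
  assert (HX : sumS enum (fun x => pif (X x) (mu x * inner X x) 0) = 0)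
    by (apply sumS_first_hit_antisym; [unfold V; auto|apply h01]).
  assert (HM : sumS enum (fun x => pif (X x) (mu x * inner M x) 0) = 0).
  { rewrite (sumS_ext _ (fun x => 0 - pif (X x) (mu x * inner X x) 0)).
    - rewrite sumS_minus, sumS_zero, HX; [ring|apply summable_zero|].
      apply summable_mu_pif. intro; apply sumS_first_hit_bound; [unfold V; auto|intro; apply h_diff_bound].
    - intro x. destruct (excluded_middle_informative (X x)); [rewrite !pif_true by auto|rewrite !pif_false by auto; ring].
      specialize (Hrow x x0). nra. }
  assert (E : sumS enum (fun x => pif (X x) (mu x * (hit enum p Mi Mo x * hit enum p M X x)) 0 -
                                  pif (X x) (mu x * hit enum p Mi (fun z => X z \/ Mo z) x) 0) = 0).
  { rewrite <- HM. apply sumS_ext. intro x. destruct (excluded_middle_informative (X x)).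
    - rewrite !pif_true by auto. unfold inner. rewrite sumS_first_hit_M_h_diff by auto. ring.
    - rewrite !pif_false by auto. ring. }
  rewrite sumS_minus in E; [lra| |].
  - apply summable_mu_pif. intro x; pose proof (hit01 Mi Mo x); pose proof (hit01 M X x). apply Rabs_le; split; nra.
  - apply summable_mu_pif. intro x; pose proof (hit01 Mi (fun z => X z \/ Mo z) x). apply Rabs_le; lra.
Qed.

(* Reversibility: the equilibrium flow from [X] to [Mi] equals the flow from [Mi] to [X]. *)
Lemma sumS_mu_hit_transpose :
  sumS enum (fun x => pif (X x) (mu x * hit enum p Mi (fun z => X z \/ Mo z) x) 0) =
  sumS enum (fun y => pif (Mi y) (mu y * hit enum p X M y) 0).
Proof.
  rewrite (sumS_ext _ _ (fun x => f_equal (fun t => pif (X x) (mu x * t) 0) (hit_first_hit_V_Mi x))).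
  rewrite (sumS_ext (fun y => pif (Mi y) (mu y * hit enum p X M y) 0) _
             (fun y => f_equal (fun t => pif (Mi y) (mu y * t) 0) (hit_first_hit_V_X y))).
  apply sumS_first_hit_transpose; unfold V, M; auto.
Qed.

Lemma hit_detour_le d y : (forall x, X x -> d < hit enum p Mo Mi x) -> 0 < d ->
  d * hit enum p X M y <= hit enum p Mo Mi y.
Proof.
  intros Hd Hd0.
  destruct (hit_first_visit_decomp V Mo Mi y) as [D1 D2]; [eauto|unfold V, M; auto|unfold V, M; auto|].
  assert (HsX := summable_first_hit_indicator V X y (fun z Hz => or_introl Hz)).
  rewrite hit_first_hit_V_X, D2, <- sumS_scal by exact HsX.
  apply sumS_le; [apply summable_scal, HsX|exact D1|].
  intro z. pose proof (first_hit01 V z y). pose proof (h01 Mo Mi z).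
  destruct (excluded_middle_informative (X z)).
  - rewrite (pif_true (X z)), (pif_true (V z)) by (unfold V; auto). unfold h. rewrite !pif_false by eauto.
    specialize (Hd z x). nra.
  - rewrite (pif_false (X z)) by auto. pifs; nra.
Qed.

Lemma mass_escape_bound d Kr : (exists a, Mi a) ->
  (forall x, X x -> 1 <= Kr * hit enum p Mi Mo x) -> (forall x, X x -> d < hit enum p Mo Mi x) -> 0 < d -> 0 <= Kr ->
  d * sumS enum (fun x => pif (X x) (mu x * hit enum p M X x) 0) <= Kr * cap enum p mu Mi Mo.
Proof.
  intros Ha HK Hd Hd0 HK0.
  assert (Hs1 : summable enum (fun x => pif (X x) (mu x * hit enum p M X x) 0)).
  { apply summable_mu_pif. intro x; pose proof (hit01 M X x). apply Rabs_le; lra. }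
  assert (Hs2 : summable enum (fun x => pif (X x) (mu x * (hit enum p Mi Mo x * hit enum p M X x)) 0)).
  { apply summable_mu_pif. intro x; pose proof (hit01 Mi Mo x); pose proof (hit01 M X x). apply Rabs_le; split; nra. }
  assert (Hs3 : summable enum (fun y => pif (Mi y) (mu y * hit enum p X M y) 0)).
  { apply summable_mu_pif. intro y; pose proof (hit01 X M y). apply Rabs_le; lra. }
  apply Rle_trans with (d * (Kr * sumS enum (fun x => pif (X x) (mu x * (hit enum p Mi Mo x * hit enum p M X x)) 0))).
  - apply Rmult_le_compat_l; [lra|]. rewrite <- sumS_scal by exact Hs2.
    apply sumS_le; [exact Hs1|apply summable_scal, Hs2|].
    intro x. destruct (excluded_middle_informative (X x)); [|rewrite !pif_false by auto; lra].
    rewrite !pif_true by auto. specialize (HK x x0). pose proof (hit01 M X x). pose proof (mu_nonneg x).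
    assert (0 <= mu x * hit enum p M X x) by nra.
    replace (Kr * (mu x * (hit enum p Mi Mo x * hit enum p M X x)))
      with ((Kr * hit enum p Mi Mo x) * (mu x * hit enum p M X x)) by ring. nra.
  - rewrite sumS_mu_hit_product, sumS_mu_hit_transpose by exact Ha. unfold cap, sumIn.
    replace (d * (Kr * sumS enum (fun y => pif (Mi y) (mu y * hit enum p X M y) 0)))
      with (Kr * (d * sumS enum (fun y => pif (Mi y) (mu y * hit enum p X M y) 0))) by ring.
    apply Rmult_le_compat_l; auto. rewrite <- sumS_scal by exact Hs3.
    apply sumS_le; [apply summable_scal, Hs3|apply summable_mu_pif|].
    + intro y; pose proof (hit01 Mo Mi y). apply Rabs_le; lra.
    + intro y. destruct (excluded_middle_informative (Mi y)); [|rewrite !pif_false by auto; lra].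
      rewrite !pif_true by auto. pose proof (hit_detour_le d y Hd Hd0). pose proof (mu_nonneg y). nra.
Qed.

End ThreeSets.

(** * Metastable sets *)

Lemma muS_nonneg A : 0 <= muS enum mu A.
Proof.
  unfold muS, sumIn. apply sumS_nonneg.
  - apply summable_mu_bounded. intro x. pose proof (mu_nonneg x). pifs; [rewrite Rabs_right|rewrite Rabs_R0]; lra.
  - intro x. pose proof (mu_nonneg x). pifs; lra.
Qed.

Lemma muS_pos A : (exists x, A x) -> 0 < muS enum mu A.
Proof.
  intros [x Hx]. unfold muS, sumIn. eapply Rlt_le_trans; [|apply (term_le_sumS chain_enum _ x)].
  - cbv beta. rewrite pif_true by auto. apply mu_pos.
  - apply summable_mu_bounded. intro z. pose proof (mu_nonneg z). pifs; [rewrite Rabs_right|rewrite Rabs_R0]; lra.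
  - intro z. pose proof (mu_nonneg z). pifs; lra.
Qed.

Lemma muS_empty A : (forall x, ~ A x) -> muS enum mu A = 0.
Proof.
  intro HA. unfold muS, sumIn. rewrite (sumS_ext _ (fun _ => 0)); [apply sumS_zero|].
  intro x. apply pif_false, HA.
Qed.

Lemma hit_empty_target A B x : (forall z, ~ A z) -> hit enum p A B x = 0.
Proof.
  intro HA. apply UL_sequence with (fun n => hitn St enum p A B n x); [apply hitn_cv|].
  apply Un_cv_ext with (fun _ => 0); [|apply Un_cv_const].
  intro n. revert x. induction n; intro x; [reflexivity|]. rewrite hitn_succ.
  rewrite (sumS_ext _ (fun _ => 0)); [symmetry; apply sumS_zero|].
  intro y. rewrite <- IHn. pifs; try ring. exfalso; eapply HA; eauto.
Qed.

Fixpoint sum_lt (f : nat -> R) n := match n with O => 0 | S n => sum_lt f n + f n end.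

Lemma sum_lt_le f n c : (forall j, (j < n)%nat -> f j <= c) -> sum_lt f n <= INR n * c.
Proof.
  induction n; intro H; cbn [sum_lt]; [simpl; lra|]. rewrite S_INR.
  assert (sum_lt f n <= INR n * c) by (apply IHn; intros; apply H; lia).
  assert (f n <= c) by (apply H; lia). lra.
Qed.

Lemma fold_Rmax_ge (l : list R) a : In a l -> a <= fold_right Rmax 0 l.
Proof.
  induction l; simpl; intro H; [destruct H|].
  destruct H; [subst; apply Rmax_l|]. eapply Rle_trans; [apply IHl; auto|apply Rmax_r].
Qed.

Section Family.
Variable K : nat.
Variable M : nat -> St -> Prop.
Hypothesis Hdisj : forall j k z, (j < K)%nat -> (k < K)%nat -> j <> k -> M j z -> M k z -> False.

Let prefix n z := exists j, (j < n)%nat /\ M j z.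

Lemma sum_lt_hit_prefix x n : (n <= K)%nat ->
  sum_lt (fun j => hit enum p (M j) (fun y => Mall K M y /\ ~ M j y) x) n =
  hit enum p (prefix n) (fun y => Mall K M y /\ ~ prefix n y) x.
Proof.
  induction n; intro Hn.
  - symmetry. apply hit_empty_target. intros z [j [Hj _]]; lia.
  - cbn [sum_lt]. rewrite IHn by lia.
    set (C := fun y => Mall K M y /\ ~ prefix (S n) y).
    assert (HAB : forall z, prefix n z -> M n z -> False) by (intros z [j [Hj H1]] H2; apply (Hdisj j n z); auto; lia).
    assert (HAC : forall z, prefix n z -> C z -> False) by (intros z [j [Hj H1]] [_ H2]; apply H2; exists j; split; auto).
    assert (HBC : forall z, M n z -> C z -> False) by (intros z H1 [_ H2]; apply H2; exists n; split; auto).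
    assert (E1 : (fun z => M n z \/ C z) = (fun y => Mall K M y /\ ~ prefix n y)).
    { apply pred_ext. intro z. split.
      - intros [H|[H1 H2]]; split; [exists n; split; auto; lia|eauto|auto|].
        intros [j [Hj H]]. apply H2. exists j; split; auto.
      - intros [H1 H2]. destruct (classic (M n z)) as [H|H]; [left; auto|right; split; auto].
        intros [j [Hj Hz]]. destruct (Nat.eq_dec j n); [subst; auto|]. apply H2. exists j; split; auto; lia. }
    assert (E2 : (fun z => prefix n z \/ C z) = (fun y => Mall K M y /\ ~ M n y)).
    { apply pred_ext. intro z. split.
      - intros [[j [Hj H]]|[H1 H2]]; split.
        + exists j; split; auto; lia.
        + intro. apply (Hdisj j n z); auto; lia.
        + auto.
        + intro. apply H2. exists n; split; auto.
      - intros [H1 H2]. destruct (classic (prefix n z)) as [H|H]; [left; auto|right; split; auto].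
        intros [j [Hj Hz]]. destruct (Nat.eq_dec j n); [subst; auto|]. apply H. exists j; split; auto; lia. }
    assert (E3 : (fun z => prefix n z \/ M n z) = prefix (S n)).
    { apply pred_ext. intro z. split.
      - intros [[j [Hj H]]|H]; [exists j|exists n]; split; auto.
      - intros [j [Hj H]]. destruct (Nat.eq_dec j n); [subst; right; auto|left; exists j; split; auto; lia]. }
    pose proof (hit_union (prefix n) (M n) C x HAB HAC HBC) as E. rewrite E1, E2, E3 in E. exact E.
Qed.

(* By recurrence the chain enters [Mall] a.s., and the first [M j] it enters is unique. *)
Lemma sum_lt_hit_family x : (exists t, Mall K M t) ->
  sum_lt (fun j => hit enum p (M j) (fun y => Mall K M y /\ ~ M j y) x) K = 1.
Proof.
  intro Hne. rewrite sum_lt_hit_prefix by lia.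
  rewrite (pred_ext (fun y => Mall K M y /\ ~ prefix K y) (fun _ => False)); [apply hit_recurrent, Hne|].
  intro z. unfold Mall, prefix. tauto.
Qed.

End Family.

Section HarmonicNeighbourhoods.
Variables (K : nat) (M : nat -> St -> Prop) (Sp : nat -> St -> Prop) (i : nat) (IB : nat -> Prop) (delta : R).
Hypothesis Hfam : metastable_family K M.
Hypothesis Hpart : metastable_partition enum p K M Sp.
Hypothesis Hi : (i < K)%nat.
Hypothesis HIB : forall j, IB j -> (j < K)%nat /\ j <> i.
Hypothesis HIBne : exists j, IB j.
Hypothesis Hdelta : 0 < delta < 1 / 2.

Let B := unionM M IB.
Let U1 := harm_nbhd enum p Sp (fun j => j = i) (M i) B delta.
Let U2 := harm_nbhd enum p Sp IB B (M i) delta.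

Lemma M_sub_Sp j z : (j < K)%nat -> M j z -> Sp j z.
Proof. apply (proj2 (proj2 (proj2 Hpart))). Qed.

Lemma Sp_disjoint j k z : (j < K)%nat -> (k < K)%nat -> j <> k -> Sp j z -> Sp k z -> False.
Proof. apply (proj1 (proj2 Hpart)). Qed.

Lemma Mi_nonempty : exists a, M i a.
Proof. apply Hfam, Hi. Qed.

Lemma Mi_B_disjoint z : M i z -> B z -> False.
Proof. intros H1 [j [Hj H2]]. destruct (HIB j Hj). apply (proj2 Hfam i j z); auto. Qed.

Lemma hit_Mi_B_complement x : hit enum p (M i) B x + hit enum p B (M i) x = 1.
Proof. destruct Mi_nonempty as [a Ha]. apply hit_complement; [exact Mi_B_disjoint|exists a; auto]. Qed.

Lemma Mi_sub_U1 z : M i z -> U1 z.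
Proof.
  intro Hz. split; [exists i; split; auto; apply M_sub_Sp; auto|].
  unfold h. rewrite pif_true by auto. lra.
Qed.

Lemma B_sub_U2 z : B z -> U2 z.
Proof.
  intros [j [Hj Hz]]. split; [exists j; split; auto; apply M_sub_Sp; auto; apply HIB; auto|].
  unfold h. rewrite pif_true by (exists j; auto). lra.
Qed.

Lemma U1_U2_disjoint z : U1 z -> U2 z -> False.
Proof.
  intros [[j [Hj1 Hj2]] _] [[k [Hk1 Hk2]] _]. subst j. destruct (HIB k Hk1).
  apply (Sp_disjoint i k z); auto.
Qed.

Lemma h_le_delta_on_U2 x : U2 x -> h enum p (M i) B x <= delta.
Proof.
  intros [[j [Hj Hx]] Hh]. unfold h in *.
  destruct (excluded_middle_informative (B x)); [rewrite pif_false, pif_true by eauto using Mi_B_disjoint; lra|].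
  assert (~ M i x).
  { intro Hm. destruct (HIB j Hj). apply (Sp_disjoint i j x); auto using M_sub_Sp. }
  rewrite !pif_false in * by auto. pose proof (hit_Mi_B_complement x). lra.
Qed.

Lemma harm_nbhd_cap_ratio :
  1 - 2 * delta <= cap enum p mu (M i) B / cap enum p mu U1 U2 <= 1.
Proof.
  assert (HBne : exists b, B b).
  { destruct HIBne as [j Hj]. destruct (proj1 Hfam j) as [b Hb]; [apply HIB; auto|]. exists b, j; auto. }
  destruct (cap_harm_nbhd_bounds (M i) B U1 U2 delta Mi_B_disjoint Mi_nonempty HBne Mi_sub_U1 B_sub_U2 U1_U2_disjoint
              (fun x Hx => proj2 Hx) h_le_delta_on_U2) as [[Hlo Hup] Hpos].
  assert (Hc : 0 < cap enum p mu U1 U2) by lra.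
  split; apply Rmult_le_reg_r with (cap enum p mu U1 U2); auto;
    unfold Rdiv; rewrite Rmult_assoc, Rinv_l by lra; lra.
Qed.

Let X x := Sp i x /\ ~ U1 x.
Let Mo x := Mall K M x /\ ~ M i x.

Lemma X_outside_Mall x : X x -> ~ Mall K M x.
Proof.
  intros [Hs Hu] [j [Hj Hm]]. destruct (Nat.eq_dec j i) as [->|Hji].
  - apply Hu, Mi_sub_U1, Hm.
  - apply (Sp_disjoint i j x); auto using M_sub_Sp.
Qed.

(* On the valley [S_i] the chain is at least as likely to reach [M_i] first as any other [M_j]. *)
Lemma K_hit_Mi_ge1 x : X x -> 1 <= INR K * hit enum p (M i) Mo x.
Proof.
  intro Hx. destruct Mi_nonempty as [a Ha].
  rewrite <- (sum_lt_hit_family K M (proj2 Hfam) x) by (exists a, i; auto).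
  apply (sum_lt_le (fun j => hit enum p (M j) (fun y => Mall K M y /\ ~ M j y) x) K).
  intros j Hj. destruct (Nat.eq_dec j i); [subst; apply Rle_refl|].
  apply (proj1 (proj2 (proj2 Hpart)) i x Hi (proj1 Hx) j Hj n).
Qed.

Lemma hit_Mo_gt_delta x : X x -> delta < hit enum p Mo (M i) x.
Proof.
  intros [Hs Hu].
  assert (HBMo : forall z, B z -> Mo z).
  { intros z Hz. split; [destruct Hz as [j [Hj Hz]]; exists j; split; auto; apply HIB; auto|].
    intro; eauto using Mi_B_disjoint. }
  assert (Hn : ~ 1 - delta <= h enum p (M i) B x) by (intro; apply Hu; split; [exists i|]; auto).
  assert (HnM : ~ M i x) by (intro; apply Hu, Mi_sub_U1; auto).
  assert (HnB : ~ B x) by (intro H; apply (X_outside_Mall x); [split; auto|apply (HBMo x H)]).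
  unfold h in Hn. rewrite !pif_false in Hn by auto.
  pose proof (hit_Mi_B_complement x). pose proof (hit_monotone B Mo (M i) x HBMo). lra.
Qed.

Lemma Mo_nonempty : (2 <= K)%nat -> exists b, Mo b.
Proof.
  intro HK. set (j := if Nat.eq_dec i 0 then 1%nat else 0%nat).
  assert (Hj : (j < K)%nat /\ j <> i) by (unfold j; destruct (Nat.eq_dec i 0); lia).
  destruct (proj1 Hfam j (proj1 Hj)) as [b Hb]. exists b. split; [exists j; split; auto; apply Hj|].
  intro H. apply (proj2 Hfam i j b); auto. apply Hj. intro; apply (proj2 Hj); auto.
Qed.

Lemma cap_Mi_Mo_le_p_esc : cap enum p mu (M i) Mo <= p_esc St enum p mu K M * muS enum mu (M i).
Proof.
  assert (Hmi : 0 < muS enum mu (M i)) by (apply muS_pos, Mi_nonempty).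
  assert (Hesc : esc St enum p mu K M i = cap enum p mu (M i) Mo / muS enum mu (M i)) by reflexivity.
  assert (Hpe : esc St enum p mu K M i <= p_esc St enum p mu K M)
    by (apply fold_Rmax_ge, in_map, in_seq; lia).
  rewrite Hesc in Hpe. apply Rmult_le_reg_r with (/ muS enum mu (M i)); [apply Rinv_0_lt_compat; lra|].
  rewrite Rmult_assoc, Rinv_r by lra. unfold Rdiv in Hpe. lra.
Qed.

Lemma p_esc_pos : (2 <= K)%nat -> 0 < p_esc St enum p mu K M.
Proof.
  intro HK. assert (Hmi : 0 < muS enum mu (M i)) by (apply muS_pos, Mi_nonempty).
  assert (Hcap : 0 < cap enum p mu (M i) Mo).
  { apply cap_pos; [intros z H1 [_ H2]; auto|apply Mi_nonempty|apply Mo_nonempty, HK]. }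
  pose proof cap_Mi_Mo_le_p_esc. nra.
Qed.

Lemma harm_nbhd_mass_bound rho : (2 <= K)%nat -> 0 < rho -> metastable enum p mu K M rho ->
  muS enum mu (fun x => Sp i x /\ ~ U1 x) <= rho * / delta * muS enum mu (M i).
Proof.
  intros HK Hrho Hmeta. fold X.
  assert (Hmi : 0 <= muS enum mu (M i)) by apply muS_nonneg.
  assert (Hcoef : 0 <= rho * / delta) by (apply Rmult_le_pos; [lra|apply Rlt_le, Rinv_0_lt_compat; lra]).
  destruct (classic (exists x, X x)) as [HX|HX].
  2: { rewrite muS_empty by (intros x Hx; apply HX; eauto). nra. }
  set (c := sumS enum (fun x => pif (X x) (mu x * hit enum p (Mall K M) X x) 0)).
  set (q := INR K * p_esc St enum p mu K M).
  assert (HmX : 0 < muS enum mu X) by (apply muS_pos, HX).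
  assert (Hq : 0 < q) by (unfold q; pose proof (p_esc_pos HK); pose proof (lt_0_INR K ltac:(lia)); nra).
  assert (Hmeta' : q * muS enum mu X <= rho * c).
  { pose proof (Hmeta X HX X_outside_Mall) as Hm. change (q <= rho * (c / muS enum mu X)) in Hm.
    apply Rmult_le_compat_r with (r := muS enum mu X) in Hm; [|lra].
    unfold Rdiv in Hm. rewrite Rmult_assoc, Rmult_assoc, Rinv_l, Rmult_1_r in Hm by lra. exact Hm. }
  assert (Hflow : delta * c <= q * muS enum mu (M i)).
  { assert (HM : (fun z => M i z \/ Mo z) = Mall K M).
    { apply pred_ext. intro z. unfold Mo. split; [intros [H|[H _]]; auto; exists i; auto|].
      intro H. destruct (classic (M i z)); auto. }
    pose proof (mass_escape_bound (M i) Mo X (fun z H1 H2 => proj2 H2 H1)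
                  (fun z Hz H => X_outside_Mall z Hz (ex_intro _ i (conj Hi H)))
                  (fun z Hz H => X_outside_Mall z Hz (proj1 H)) delta (INR K) Mi_nonempty
                  K_hit_Mi_ge1 hit_Mo_gt_delta ltac:(lra) (pos_INR K)) as PB.
    rewrite HM in PB. fold c in PB.
    pose proof cap_Mi_Mo_le_p_esc. unfold q. pose proof (pos_INR K). nra. }
  apply Rmult_le_reg_l with (delta * q); [nra|].
  replace (delta * q * (rho * / delta * muS enum mu (M i))) with (rho * (q * muS enum mu (M i))) by (field; lra).
  nra.
Qed.

End HarmonicNeighbourhoods.

End MarkovChain.

Theorem mainTheorem14
  (S : Type) (enum : nat -> option S) (p : S -> S -> R) (mu : S -> R)
  (K : nat) (M : nat -> S -> Prop) (Sp : nat -> S -> Prop) (rho : R)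
  (i : nat) (IB : nat -> Prop) (delta : R)
  (Hchain : chain_setting enum p mu)
  (HK : (2 <= K)%nat)
  (Hfam : metastable_family K M)
  (Hrho : 0 < rho)
  (Hmeta : metastable enum p mu K M rho)
  (Hpart : metastable_partition enum p K M Sp)
  (Hi : (i < K)%nat)
  (HIB : forall j, IB j -> (j < K)%nat /\ j <> i)
  (HIBne : exists j, IB j)
  (Hdelta : 0 < delta < 1 / 2) :
  let B := unionM M IB in
  let U1 := harm_nbhd enum p Sp (fun j => j = i) (M i) B delta in
  let U2 := harm_nbhd enum p Sp IB B (M i) delta in
  (1 - 2 * delta <= cap enum p mu (M i) B / cap enum p mu U1 U2 <= 1) /\
  muS enum mu (fun x => Sp i x /\ ~ U1 x) <= rho * / delta * muS enum mu (M i).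
Proof.
  intros B U1 U2. split.
  - exact (harm_nbhd_cap_ratio S enum p mu Hchain K M Sp i IB delta Hfam Hpart Hi HIB HIBne Hdelta).
  - exact (harm_nbhd_mass_bound S enum p mu Hchain K M Sp i IB delta Hfam Hpart Hi HIB Hdelta rho HK Hrho Hmeta).
Qed.
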